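(* Let $\Gamma\subset(0,\infty)$ be unbounded above, and for $\gamma\in\Gamma$ let $p_\gamma\in[1,2]$, $\mu_\gamma>0$, and let $\lambda_\gamma>0$ be defined by $\lambda_\gamma p_\gamma^2\gamma^{2(p_\gamma-1)}\mu_\gamma^2e^{\gamma^{p_\gamma}}=8$. Let $t_\gamma(x)=\ln(1+|x|^2/\mu_\gamma^2)$ on $\mathbb R^2$. Fix $\eta\in(0,1)$ and $h_0>0$. Let $\bar r_\gamma>0$ satisfy $\mu_\gamma/\bar r_\gamma\to0$ as $\gamma\to\infty$, $t_\gamma(\bar r_\gamma)\le\eta p_\gamma\gamma^{p_\gamma}/2$ for all large $\gamma$, and $\gamma^{2p_\gamma}\bar r_\gamma^2=O(1)$. Let $B_\gamma$ be radially symmetric, positive in $B_{\bar r_\gamma}(0)\subset\mathbb R^2$, with $B_\gamma(0)=\gamma$ and $$\Delta B_\gamma+h_0B_\gamma=\lambda_\gamma p_\gamma B_\gamma^{p_\gamma-1}e^{B_\gamma^{p_\gamma}}\quad\text{in }B_{\bar r_\gamma}(0),$$ and define $w_\gamma$ by $B_\gamma=\gamma\left(1-\frac{2t_\gamma}{p_\gamma\gamma^{p_\gamma}}+\frac{w_\gamma}{\gamma^{p_\gamma}}\right)$. Then, for every fixed $\tilde\eta\in(\eta,1)$, there exist $C>0$ and $\gamma_0$ such that for all $\gamma\in\Gamma$, $\gamma\ge\gamma_0$ and all $r\in[0,\bar r_\gamma]$ (writing radial functions as functions of $r=|x|$): $B_\gamma(r)\le\gamma$, $|w_\gamma(r)|\le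 C\gamma^{-p_\gamma}t_\gamma(r)$, $|w_\gamma'(r)|\le C\gamma^{-p_\gamma}t_\gamma'(r)$, and $$\lambda_\gamma p_\gamma B_\gamma^{p_\gamma-1}e^{B_\gamma^{p_\gamma}}(r)=\frac{8e^{-2t_\gamma(r)}}{\mu_\gamma^2\gamma^{p_\gamma-1}p_\gamma}\left(1+E_\gamma(r)\right),\quad |E_\gamma(r)|\le C\frac{e^{\tilde\eta t_\gamma(r)}}{\gamma^{p_\gamma}}.$$
   Context: $\Delta=-\partial_{xx}-\partial_{yy}$ is the (nonnegative) Euclidean Laplacian on $\mathbb R^2$. *)

From Stdlib Require Import Reals.
From Coquelicot Require Import Coquelicot.
Open Scope R_scope.

Definition lam (p mu g : R) : R :=
  8 / (p ^ 2 * Rpower g (2 * (p - 1)) * mu ^ 2 * exp (Rpower g p)).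

Definition tfun (mu r : R) : R := ln (1 + r ^ 2 / mu ^ 2).

(* w_gamma defined by B = gamma (1 - 2 t/(p gamma^p) + w/gamma^p) *)
Definition wfun (g p mu : R) (b : R -> R) (r : R) : R :=
  Rpower g p * (b r / g - 1 + 2 * tfun mu r / (p * Rpower g p)).

Definition nonlin (l p b : R) : R := l * p * Rpower b (p - 1) * exp (Rpower b p).

From Stdlib Require Import Reals Lra Psatz Classical.
From Coquelicot Require Import Coquelicot.
Open Scope R_scope.

(* Write [B = gamma (1 - 2 t / (p gamma^p) + w / gamma^p)]; here [-2 t] is the Liouville bubble
   of scale [mu].  The equation for [B] becomes the linearized Liouville equation
   [w'' + w' / r + rho w = F] with [rho = 8 e^(-2t) / mu^2], where [F] collects the term
   [h0 B] and the part of the nonlinearity beyond first order in [w].  The radial kernel of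
   the linearized operator is spanned by [phi0 = 2 e^(-t) - 1] and [phi1 = phi0 ln (r / mu) + 1],
   whose Wronskian is [1 / r]; integrating the Wronskians of [w] with [phi0] and [phi1] bounds
   [w] and [w'] by [t] and [t'] times a bound on [F].
   Conversely, as long as [|w| <= A (t + 1) / gamma^p], a Taylor expansion of the nonlinearity
   around the bubble bounds [F]: the hypothesis [t <= eta p gamma^p / 2] keeps [B] away from
   [0] and costs only a factor [e^(eta' t)].  The linear estimate then returns the strictly
   better bound [|w| <= C1 t / gamma^p] with [C1 < A], and a continuity argument in [r] closes
   the bootstrap.  The same expansion gives the bound on [E_gamma]. *)

(** * Calculus and elementary inequalities *)

Lemma is_derive_continuity_pt (f : R -> R) x l : is_derive f x l -> continuity_pt f x.
Proof.
  intros Hf. apply continuity_pt_filterlim.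
  apply (ex_derive_continuous (V := R_NormedModule)). now exists l.
Qed.

Lemma is_derive_eq (f : R -> R) (x l l' : R) : is_derive f x l -> l = l' -> is_derive f x l'.
Proof. now intros Hf <-. Qed.

Lemma is_derive_Rmult (f g : R -> R) x df dg : is_derive f x df -> is_derive g x dg ->
  is_derive (fun y => f y * g y) x (df * g x + f x * dg).
Proof. intros Hf Hg. apply (is_derive_mult f g); auto. intros; apply Rmult_comm. Qed.

Lemma is_derive_Rminus (f g : R -> R) x df dg : is_derive f x df -> is_derive g x dg ->
  is_derive (fun y => f y - g y) x (df - dg).
Proof. apply (is_derive_minus f g). Qed.

Lemma le_of_derive_nonneg (h dh : R -> R) a b : a <= b ->
  (forall x, a < x < b -> is_derive h x (dh x)) ->
  (forall x, a <= x <= b -> continuity_pt h x) ->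
  (forall x, a < x < b -> 0 <= dh x) -> h a <= h b.
Proof.
  intros Hab Hd Hc Hpos.
  destruct (Req_dec a b) as [<-|Hne]; [lra|].
  assert (pr1 : forall c, a < c < b -> derivable_pt h c).
  { intros c Hc'. exists (dh c). apply is_derive_Reals, Hd, Hc'. }
  assert (pr2 : forall c, a < c < b -> derivable_pt id c) by (intros; apply derivable_pt_id).
  destruct (MVT h id a b pr1 pr2 ltac:(lra) Hc) as [c [Hca E]].
  { intros c _. apply derivable_continuous_pt, derivable_pt_id. }
  rewrite (derive_pt_eq_0 h c (dh c) (pr1 c Hca)) in E
    by (apply is_derive_Reals, Hd, Hca).
  rewrite (derive_pt_eq_0 id c 1 (pr2 c Hca)) in E by apply derivable_pt_lim_id.
  unfold id in E. specialize (Hpos c Hca). nra.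
Qed.

Lemma Rabs_increment_le (f df H dH : R -> R) a b : a <= b ->
  (forall x, a < x < b -> is_derive f x (df x)) ->
  (forall x, a < x < b -> is_derive H x (dH x)) ->
  (forall x, a <= x <= b -> continuity_pt f x) ->
  (forall x, a <= x <= b -> continuity_pt H x) ->
  (forall x, a < x < b -> Rabs (df x) <= dH x) ->
  Rabs (f b - f a) <= H b - H a.
Proof.
  intros Hab Hf HH Cf CH Hd.
  assert (Hlow : H a - f a <= H b - f b).
  { apply (le_of_derive_nonneg (fun x => H x - f x) (fun x => dH x - df x)); auto.
    - intros x Hx. apply is_derive_Rminus; auto.
    - intros x Hx. apply continuity_pt_minus; auto.
    - intros x Hx. specialize (Hd x Hx). apply Rabs_le_between in Hd. lra. }
  assert (Hup : H a + f a <= H b + f b).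
  { apply (le_of_derive_nonneg (fun x => H x + f x) (fun x => dH x + df x)); auto.
    - intros x Hx. apply (is_derive_plus H f); auto.
    - intros x Hx. apply continuity_pt_plus; auto.
    - intros x Hx. specialize (Hd x Hx). apply Rabs_le_between in Hd. lra. }
  apply Rabs_le; lra.
Qed.

Lemma continuity_pt_Rabs_lt (f : R -> R) x0 eps : continuity_pt f x0 -> 0 < eps ->
  exists d, 0 < d /\ forall x, Rabs (x - x0) < d -> Rabs (f x - f x0) < eps.
Proof.
  intros Hc He. destruct (Hc eps He) as [d [Hd H]].
  exists d. split; auto. intros x Hx.
  destruct (Req_dec x x0) as [->|N]; [now rewrite Rminus_diag, Rabs_R0|].
  apply H. repeat split; auto.
Qed.

Section ContinuityArgument.

Variables (phi : R -> R) (R0 : R).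
Hypothesis R0_ge0 : 0 <= R0.
Hypothesis phi_cont : forall s, 0 <= s <= R0 -> continuity_pt phi s.
Hypothesis phi_0 : phi 0 <= 0.
Hypothesis phi_improve : forall r, 0 <= r <= R0 ->
  (forall s, 0 <= s <= r -> phi s <= 0) -> forall s, 0 <= s <= r -> phi s < 0.

Let nonpos_upto r := 0 <= r <= R0 /\ forall s, 0 <= s <= r -> phi s <= 0.

Lemma nonpos_upto_lub m : is_lub nonpos_upto m -> nonpos_upto m.
Proof.
  intros [Hub Hlub].
  assert (Hm0 : 0 <= m).
  { apply Hub. split; [lra|]. intros s Hs. now replace s with 0 by lra. }
  assert (HmR : m <= R0) by (apply Hlub; intros r [Hr _]; lra).
  assert (Hbelow : forall s, 0 <= s < m -> phi s <= 0).
  { intros s Hs. apply NNPP. intros Hnot.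
    assert (m <= s); [|lra].
    apply Hlub. intros r [Hr Hphi]. destruct (Rle_dec r s); auto.
    exfalso. apply Hnot, Hphi. lra. }
  split; [lra|]. intros s Hs.
  destruct (Rlt_le_dec s m) as [Hsm|Hms]; [apply Hbelow; lra|].
  replace s with m by lra.
  destruct (Req_dec m 0) as [->|Nm]; auto.
  apply Rnot_lt_le. intros Hpos.
  destruct (continuity_pt_Rabs_lt phi m (phi m) (phi_cont m ltac:(lra)) Hpos)
    as [d [Hd Hn]].
  set (x := Rmax 0 (m - d / 2)).
  assert (Hx : 0 <= x < m /\ Rabs (x - m) < d).
  { unfold x, Rmax. destruct Rle_dec; rewrite Rabs_left; lra. }
  specialize (Hn x (proj2 Hx)). specialize (Hbelow x (proj1 Hx)).
  apply Rabs_def2 in Hn. lra.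
Qed.

Lemma continuity_argument : forall s, 0 <= s <= R0 -> phi s <= 0.
Proof.
  assert (Hbound : bound nonpos_upto) by (exists R0; intros r [Hr _]; lra).
  assert (H0 : nonpos_upto 0).
  { split; [lra|]. intros s Hs. now replace s with 0 by lra. }
  destruct (completeness nonpos_upto Hbound (ex_intro _ 0 H0)) as [m Hm].
  destruct (nonpos_upto_lub m Hm) as [HmR Hle].
  assert (HmR' : m = R0).
  { apply NNPP. intros Hne.
    assert (Hneg := phi_improve m HmR Hle).
    destruct (continuity_pt_Rabs_lt phi m (- phi m) (phi_cont m HmR)
      ltac:(specialize (Hneg m ltac:(lra)); lra)) as [d [Hd Hn]].
    set (m' := Rmin R0 (m + d / 2)).
    assert (Hm' : m < m' <= R0) by (unfold m', Rmin; destruct Rle_dec; lra).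
    assert (nonpos_upto m').
    { split; [lra|]. intros s Hs.
      destruct (Rle_dec s m); [apply Rlt_le, Hneg; lra|].
      assert (Hsd : Rabs (s - m) < d)
        by (rewrite Rabs_right; unfold m', Rmin in Hs; destruct Rle_dec in Hs; lra).
      specialize (Hn s Hsd). specialize (Hneg m ltac:(lra)).
      apply Rabs_def2 in Hn. lra. }
    assert (m' <= m) by (apply (proj1 Hm); auto). lra. }
  subst m. exact Hle.
Qed.

End ContinuityArgument.

Lemma is_derive_even_0 (f : R -> R) R0 l : 0 < R0 ->
  (forall r, -R0 <= r <= R0 -> f (-r) = f r) -> is_derive f 0 l -> l = 0.
Proof.
  intros HR Hev Hd.
  assert (Hopp : is_derive (fun x => f (-x)) 0 (-l)).
  { apply (is_derive_eq _ _ (scal (-1) l)).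
    - apply (is_derive_comp f (fun x => -x)); [now rewrite Ropp_0|].
      apply is_derive_Reals, derivable_pt_lim_opp, derivable_pt_lim_id.
    - unfold scal; simpl; unfold mult; simpl; ring. }
  assert (Hd' : is_derive f 0 (-l)).
  { apply is_derive_ext_loc with (fun x => f (-x)); auto.
    exists (mkposreal R0 HR). intros y Hy.
    apply Hev. cbn in Hy. unfold AbsRing_ball, abs, minus, plus, opp in Hy; simpl in Hy.
    rewrite Ropp_0, Rplus_0_r in Hy. apply Rabs_def2 in Hy. lra. }
  apply is_derive_unique in Hd. apply is_derive_unique in Hd'. lra.
Qed.

Lemma exp_le_exp x y : x <= y -> exp x <= exp y.
Proof. intros [H|<-]; [now apply Rlt_le, exp_increasing | lra]. Qed.

Lemma ln_le_sub_1 x : 0 < x -> ln x <= x - 1.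
Proof.
  intros Hx. rewrite <- (ln_exp (x - 1)). apply ln_le; [lra|].
  generalize (exp_ineq1_le (x - 1)). lra.
Qed.

Lemma ln_1_plus_le x : 0 <= x -> ln (1 + x) <= x.
Proof. intros Hx. generalize (ln_le_sub_1 (1 + x)). lra. Qed.

Lemma ln_1_plus_ge x : 0 <= x -> x / (1 + x) <= ln (1 + x).
Proof.
  intros Hx.
  assert (H := ln_le_sub_1 (/ (1 + x)) ltac:(apply Rinv_0_lt_compat; lra)).
  rewrite ln_Rinv in H by lra.
  replace (x / (1 + x)) with (1 - / (1 + x)) by (field; lra). lra.
Qed.

Lemma Rabs_ln_le m y : 0 < m <= 1 -> m <= y -> Rabs (ln y) <= Rabs (y - 1) / m.
Proof.
  intros Hm Hy.
  destruct (Rle_dec 1 y).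
  - assert (0 <= ln y) by (rewrite <- ln_1; apply ln_le; lra).
    assert (H1 := ln_le_sub_1 y ltac:(lra)).
    rewrite !Rabs_right by lra. apply Rle_trans with (y - 1); auto.
    apply Rmult_le_reg_r with m; [lra|]. field_simplify; nra.
  - assert (ln y <= 0) by (rewrite <- ln_1; apply ln_le; lra).
    assert (H1 := ln_le_sub_1 (/ y) ltac:(apply Rinv_0_lt_compat; lra)).
    rewrite ln_Rinv in H1 by lra.
    rewrite !Rabs_left1 by lra.
    apply Rle_trans with (/ y - 1); [lra|].
    replace (/ y - 1) with ((1 - y) / y) by (field; lra).
    replace (- (y - 1)) with (1 - y) by ring.
    apply Rmult_le_compat_l; [lra|]. apply Rinv_le_contravar; lra.
Qed.

Lemma ln_2_lt_1 : ln 2 < 1.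
Proof.
  rewrite <- (ln_exp 1). apply ln_increasing; [lra|].
  generalize (exp_ineq1 1). lra.
Qed.

Lemma one_plus_le_exp_scaled t e : 0 <= t -> 0 < e -> 1 + t <= (1 + 1 / e) * exp (e * t).
Proof.
  intros Ht He. assert (H := exp_ineq1_le (e * t)).
  apply Rle_trans with ((1 + 1 / e) * (1 + e * t)).
  - assert (1 / e * (e * t) = t) by (field; lra).
    assert (0 < 1 / e) by (apply Rdiv_lt_0_compat; lra). nra.
  - apply Rmult_le_compat_l; [|lra]. assert (0 < 1 / e) by (apply Rdiv_lt_0_compat; lra). lra.
Qed.

Lemma one_plus_pow4_le_exp t e : 0 <= t -> 0 < e -> (1 + t) ^ 4 <= (1 + 4 / e) ^ 4 * exp (e * t).
Proof.
  intros Ht He.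
  assert (H := one_plus_le_exp_scaled t (e / 4) Ht ltac:(lra)).
  replace (1 / (e / 4)) with (4 / e) in H by (field; lra).
  replace (exp (e * t)) with (exp (e / 4 * t) ^ 4)
    by (simpl; rewrite Rmult_1_r, <- !exp_plus; f_equal; field).
  rewrite <- Rpow_mult_distr. apply pow_incr. lra.
Qed.

Lemma one_plus_pow4_mul_exp_le t c e : 0 <= t -> 0 < e ->
  (1 + t) ^ 4 * exp (c * t) <= (1 + 4 / e) ^ 4 * exp ((c + e) * t).
Proof.
  intros Ht He. replace ((c + e) * t) with (e * t + c * t) by ring.
  rewrite exp_plus, <- Rmult_assoc.
  apply Rmult_le_compat_r; [apply Rlt_le, exp_pos|]. now apply one_plus_pow4_le_exp.
Qed.

Lemma Rabs_exp_sub_1_le z : Rabs (exp z - 1) <= Rabs z * exp (Rabs z).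
Proof.
  destruct (MVT_gen exp 0 z exp) as [c [Hc E]].
  { intros u _. apply is_derive_Reals, derivable_pt_lim_exp. }
  { intros u _. apply derivable_continuous_pt, derivable_pt_exp. }
  rewrite exp_0, Rminus_0_r in E. rewrite E, Rabs_mult, (Rabs_right (exp c))
    by (apply Rle_ge, Rlt_le, exp_pos).
  assert (c <= Rabs z)
    by (unfold Rmin, Rmax in Hc; destruct Rle_dec; [rewrite Rabs_right|rewrite Rabs_left]; lra).
  rewrite Rmult_comm. apply Rmult_le_compat_l; [apply Rabs_pos|]. now apply exp_le_exp.
Qed.

Lemma Rabs_exp_taylor1_le z : Rabs (exp z - 1 - z) <= z ^ 2 * exp (Rabs z).
Proof.
  destruct (MVT_gen (fun y => exp y - 1 - y) 0 z (fun y => exp y - 1)) as [c [Hc E]].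
  { intros u _. auto_derive; auto. ring. }
  { intros u _. apply continuity_pt_minus; [apply continuity_pt_minus|].
    - apply derivable_continuous_pt, derivable_pt_exp.
    - apply continuity_pt_const. now intros ? ?.
    - apply derivable_continuous_pt, derivable_pt_id. }
  rewrite exp_0 in E. replace (1 - 1 - 0) with 0 in E by ring.
  rewrite !Rminus_0_r in E. rewrite E, Rabs_mult.
  assert (Hcz : Rabs c <= Rabs z)
    by (unfold Rmin, Rmax in Hc; destruct Rle_dec; [rewrite !Rabs_right|rewrite !Rabs_left1]; lra).
  assert (exp (Rabs c) <= exp (Rabs z)) by now apply exp_le_exp.
  assert (Hc1 : Rabs (exp c - 1) <= Rabs z * exp (Rabs z)).
  { eapply Rle_trans; [apply Rabs_exp_sub_1_le|].
    apply Rmult_le_compat; auto using Rabs_pos, Rlt_le, exp_pos. }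
  rewrite <- pow2_abs.
  assert (0 <= Rabs z) by apply Rabs_pos.
  assert (0 <= Rabs (exp c - 1)) by apply Rabs_pos. nra.
Qed.

Lemma sq_le_of_Rabs_le x K : Rabs x <= K -> x ^ 2 <= K ^ 2.
Proof. intros H. rewrite <- pow2_abs. apply pow_incr. split; [apply Rabs_pos|auto]. Qed.

(** * The bubble and the kernel of its linearization *)

Definition qfun (mu s : R) : R := mu ^ 2 / (mu ^ 2 + s ^ 2).
Definition dtfun (mu s : R) : R := 2 * s * qfun mu s / mu ^ 2.
Definition ddtfun (mu s : R) : R := 2 * qfun mu s / mu ^ 2 - 4 * s ^ 2 * qfun mu s ^ 2 / mu ^ 4.
Definition potential (mu s : R) : R := 8 * qfun mu s ^ 2 / mu ^ 2.

(* The radial kernel of [w'' + w' / s + potential mu * w]: [phi0] is the scaling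
   direction of the bubble [-2 tfun mu], and [phi1] is obtained by reduction of order. *)
Definition phi0 (mu s : R) : R := 2 * qfun mu s - 1.
Definition dphi0 (mu s : R) : R := -4 * s * qfun mu s ^ 2 / mu ^ 2.
Definition ddphi0 (mu s : R) : R := -4 * qfun mu s ^ 2 / mu ^ 2 + 16 * s ^ 2 * qfun mu s ^ 3 / mu ^ 4.
Definition phi1 (mu s : R) : R := phi0 mu s * ln (s / mu) + 1.
Definition dphi1 (mu s : R) : R := dphi0 mu s * ln (s / mu) + phi0 mu s / s.
Definition ddphi1 (mu s : R) : R :=
  ddphi0 mu s * ln (s / mu) + 2 * dphi0 mu s / s - phi0 mu s / s ^ 2.

Section BubbleProfile.

Context {mu : R} (mu_pos : 0 < mu).

Lemma qfun_pos s : 0 < qfun mu s.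
Proof. unfold qfun. apply Rdiv_lt_0_compat; nra. Qed.

Lemma qfun_le_1 s : qfun mu s <= 1.
Proof. unfold qfun. apply Rmult_le_reg_r with (mu ^ 2 + s ^ 2); [nra|]. field_simplify; nra. Qed.

Lemma qfun_ge_4_5 s : s ^ 2 <= mu ^ 2 / 4 -> 4 / 5 <= qfun mu s.
Proof. intros Hs. unfold qfun. apply Rmult_le_reg_r with (mu ^ 2 + s ^ 2); [nra|]. field_simplify; nra. Qed.

Lemma qfun_le_4_5 s : mu ^ 2 / 4 <= s ^ 2 -> qfun mu s <= 4 / 5.
Proof. intros Hs. unfold qfun. apply Rmult_le_reg_r with (mu ^ 2 + s ^ 2); [nra|]. field_simplify; nra. Qed.

Lemma sq_mul_qfun s : s ^ 2 * qfun mu s = mu ^ 2 * (1 - qfun mu s).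
Proof. unfold qfun. field. nra. Qed.

Lemma qfun_mul_1_sub_le s : 4 * (qfun mu s * (1 - qfun mu s)) <= 1.
Proof. assert (0 <= (2 * qfun mu s - 1) ^ 2) by apply pow2_ge_0. nra. Qed.

Lemma potential_nonneg s : 0 <= potential mu s.
Proof. unfold potential. assert (Hq := pow2_ge_0 (qfun mu s)). apply Rdiv_le_0_compat; nra. Qed.

Lemma dtfun_nonneg s : 0 <= s -> 0 <= dtfun mu s.
Proof. intros Hs. unfold dtfun. assert (Hq := qfun_pos s). apply Rdiv_le_0_compat; nra. Qed.

Lemma tfun_0 : tfun mu 0 = 0.
Proof. unfold tfun. replace (1 + 0 ^ 2 / mu ^ 2) with 1 by (field; lra). apply ln_1. Qed.

Lemma dtfun_0 : dtfun mu 0 = 0.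
Proof. unfold dtfun. field. lra. Qed.

Lemma sq_div_nonneg s : 0 <= s ^ 2 / mu ^ 2.
Proof. apply Rdiv_le_0_compat; nra. Qed.

Lemma tfun_nonneg s : 0 <= tfun mu s.
Proof.
  unfold tfun. rewrite <- ln_1. apply ln_le; [lra|]. generalize (sq_div_nonneg s). lra.
Qed.

Lemma tfun_le s : tfun mu s <= s ^ 2 / mu ^ 2.
Proof. apply ln_1_plus_le, sq_div_nonneg. Qed.

Lemma tfun_ge s : (s ^ 2 / mu ^ 2) / (1 + s ^ 2 / mu ^ 2) <= tfun mu s.
Proof. apply ln_1_plus_ge, sq_div_nonneg. Qed.

Lemma tfun_le_tfun s r : 0 <= s <= r -> tfun mu s <= tfun mu r.
Proof.
  intros Hs. unfold tfun. apply ln_le; [generalize (sq_div_nonneg s); lra|].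
  apply Rplus_le_compat_l. unfold Rdiv. apply Rmult_le_compat_r; [|nra].
  apply Rlt_le, Rinv_0_lt_compat. nra.
Qed.

Lemma exp_neg_tfun s : exp (- tfun mu s) = qfun mu s.
Proof.
  unfold tfun, qfun. rewrite exp_Ropp, exp_ln; [field; nra|].
  generalize (sq_div_nonneg s). lra.
Qed.

Lemma exp_neg2_tfun s : exp (-2 * tfun mu s) = qfun mu s ^ 2.
Proof. rewrite <- exp_neg_tfun. simpl. rewrite Rmult_1_r, <- exp_plus. f_equal. ring. Qed.

Lemma exp_tfun_sub_1 c s : exp ((c - 1) * tfun mu s) = exp (c * tfun mu s) * qfun mu s.
Proof. rewrite <- exp_neg_tfun, <- exp_plus. f_equal. ring. Qed.

Lemma qfun_mul_tfun_le s : qfun mu s * tfun mu s <= 1 - qfun mu s.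
Proof.
  assert (Hq := qfun_pos s).
  replace (tfun mu s) with (ln (/ qfun mu s))
    by (rewrite ln_Rinv, <- exp_neg_tfun, ln_exp by lra; ring).
  assert (H := ln_le_sub_1 (/ qfun mu s) ltac:(apply Rinv_0_lt_compat; lra)).
  apply Rmult_le_compat_l with (r := qfun mu s) in H; [|lra].
  rewrite Rmult_minus_distr_l, Rinv_r, Rmult_1_r in H by lra. lra.
Qed.

Lemma is_derive_tfun s : is_derive (tfun mu) s (dtfun mu s).
Proof.
  unfold tfun, dtfun, qfun. auto_derive.
  - generalize (sq_div_nonneg s). unfold Rdiv. simpl. lra.
  - field. nra.
Qed.

Lemma is_derive_dtfun s : is_derive (dtfun mu) s (ddtfun mu s).
Proof. unfold dtfun, ddtfun, qfun. auto_derive; [nra|field; nra]. Qed.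

Lemma is_derive_exp_tfun c s :
  is_derive (fun y => exp (c * tfun mu y)) s (c * dtfun mu s * exp (c * tfun mu s)).
Proof.
  apply (is_derive_eq _ _ (scal (c * dtfun mu s) (exp (c * tfun mu s)))); [|reflexivity].
  apply (is_derive_comp exp (fun y => c * tfun mu y)).
  - apply is_derive_Reals, derivable_pt_lim_exp.
  - apply is_derive_scal, is_derive_tfun.
Qed.

Lemma dtfun_ode s : s <> 0 -> ddtfun mu s + dtfun mu s / s = potential mu s / 2.
Proof. intros Hs. unfold ddtfun, dtfun, potential, qfun. field. repeat split; auto; nra. Qed.

Lemma s_mul_dtfun s : s * dtfun mu s = 2 * (1 - qfun mu s).
Proof.
  replace (s * dtfun mu s) with (2 * (s ^ 2 * qfun mu s) / mu ^ 2) by (unfold dtfun; field; nra).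
  rewrite sq_mul_qfun. field. nra.
Qed.

Lemma is_derive_phi0 s : is_derive (phi0 mu) s (dphi0 mu s).
Proof. unfold phi0, dphi0, qfun. auto_derive; [nra|field; nra]. Qed.

Lemma is_derive_dphi0 s : is_derive (dphi0 mu) s (ddphi0 mu s).
Proof. unfold ddphi0, dphi0, qfun. auto_derive; [nra|field; nra]. Qed.

Lemma is_derive_phi1 s : 0 < s -> is_derive (phi1 mu) s (dphi1 mu s).
Proof.
  intros Hs. unfold phi1, dphi1, phi0, dphi0, qfun. auto_derive.
  - repeat split; [nra| apply Rdiv_lt_0_compat; lra].
  - change (s * / mu) with (s / mu). field. repeat split; nra.
Qed.

Lemma is_derive_dphi1 s : 0 < s -> is_derive (dphi1 mu) s (ddphi1 mu s).
Proof.
  intros Hs. unfold ddphi1, dphi1, ddphi0, phi0, dphi0, qfun. auto_derive.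
  - repeat split; try nra. apply Rdiv_lt_0_compat; lra.
  - change (s * / mu) with (s / mu). field. repeat split; nra.
Qed.

Lemma phi0_kernel s : dphi0 mu s + s * ddphi0 mu s + s * potential mu s * phi0 mu s = 0.
Proof. unfold dphi0, ddphi0, potential, phi0, qfun. field. nra. Qed.

Lemma phi1_kernel s : 0 < s -> dphi1 mu s + s * ddphi1 mu s + s * potential mu s * phi1 mu s = 0.
Proof.
  intros Hs. unfold dphi1, ddphi1, phi1.
  transitivity (ln (s / mu) * (dphi0 mu s + s * ddphi0 mu s + s * potential mu s * phi0 mu s)
                + (2 * dphi0 mu s + s * potential mu s)); [field; lra|].
  rewrite phi0_kernel. unfold dphi0, potential. field. lra.
Qed.

Lemma wronskian_phi s : 0 < s -> s * (phi0 mu s * dphi1 mu s - phi1 mu s * dphi0 mu s) = 1.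
Proof. intros Hs. unfold dphi1, phi1, phi0, dphi0, qfun. field. split; nra. Qed.

Lemma Rabs_phi0_le_1 s : Rabs (phi0 mu s) <= 1.
Proof. unfold phi0. generalize (qfun_pos s) (qfun_le_1 s). intros. apply Rabs_le; lra. Qed.

Lemma phi0_ge_3_5 s : s ^ 2 <= mu ^ 2 / 4 -> 3 / 5 <= phi0 mu s.
Proof. intros Hs. generalize (qfun_ge_4_5 s Hs). unfold phi0. lra. Qed.

Lemma s_mul_dphi0 s : s * dphi0 mu s = -4 * (qfun mu s * (1 - qfun mu s)).
Proof.
  replace (1 - qfun mu s) with (s ^ 2 * qfun mu s / mu ^ 2) by (rewrite sq_mul_qfun; field; lra).
  unfold dphi0. field. lra.
Qed.

Lemma Rabs_ln_ratio_le s : mu / 2 <= s -> Rabs (ln (s / mu)) <= 1 + tfun mu s / 2.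
Proof.
  intros Hs. assert (Ht := tfun_nonneg s).
  destruct (Rle_lt_dec mu s) as [H1|H1].
  - assert (H2 : 1 <= s / mu) by (apply Rmult_le_reg_r with mu; [lra|]; field_simplify; lra).
    assert (H3 : 0 <= ln (s / mu)) by (rewrite <- ln_1; apply ln_le; lra).
    rewrite Rabs_right by lra.
    assert (2 * ln (s / mu) <= tfun mu s); [|lra].
    unfold tfun. replace (2 * ln (s / mu)) with (ln ((s / mu) * (s / mu))) by (rewrite ln_mult; lra).
    apply ln_le; [nra|]. replace (s ^ 2 / mu ^ 2) with ((s / mu) * (s / mu)) by (field; lra). lra.
  - assert (H2 : s / mu < 1) by (apply Rmult_lt_reg_r with mu; [lra|]; field_simplify; lra).
    assert (H2' : 1 / 2 <= s / mu) by (apply Rmult_le_reg_r with mu; [lra|]; field_simplify; lra).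
    assert (H3 : ln (s / mu) <= 0) by (rewrite <- ln_1; apply ln_le; lra).
    assert (H4 : ln (1 / 2) <= ln (s / mu)) by (apply ln_le; lra).
    rewrite ln_div, ln_1 in H4 by lra.
    generalize ln_2_lt_1. rewrite Rabs_left1 by lra. lra.
Qed.

Lemma Rabs_phi1_le s : mu / 2 <= s -> Rabs (phi1 mu s) <= 2 + tfun mu s / 2.
Proof.
  intros Hs. unfold phi1. eapply Rle_trans; [apply Rabs_triang|].
  rewrite Rabs_mult, Rabs_R1.
  assert (Rabs (phi0 mu s) * Rabs (ln (s / mu)) <= 1 * (1 + tfun mu s / 2)); [|lra].
  apply Rmult_le_compat; auto using Rabs_pos, Rabs_phi0_le_1, Rabs_ln_ratio_le.
Qed.

Lemma Rabs_s_mul_dphi1_le s : mu / 2 <= s -> Rabs (s * dphi1 mu s) <= 4.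
Proof.
  intros Hs. unfold dphi1.
  replace (s * (dphi0 mu s * ln (s / mu) + phi0 mu s / s))
    with ((s * dphi0 mu s) * ln (s / mu) + phi0 mu s) by (field; lra).
  rewrite s_mul_dphi0.
  eapply Rle_trans; [apply Rabs_triang|]. rewrite Rabs_mult.
  assert (H1 := Rabs_phi0_le_1 s). assert (H2 := Rabs_ln_ratio_le s Hs).
  assert (Hq := qfun_pos s). assert (Hq1 := qfun_le_1 s).
  assert (Hqt := qfun_mul_tfun_le s). assert (Ht := tfun_nonneg s).
  assert (H5 := qfun_mul_1_sub_le s).
  set (q := qfun mu s) in *.
  assert (Hqq : 0 <= q * (1 - q)) by (apply Rmult_le_pos; lra).
  rewrite Rabs_left1 by lra.
  assert (- (-4 * (q * (1 - q))) * Rabs (ln (s / mu)) <= 4 * (q * (1 - q)) * (1 + tfun mu s / 2))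
    by (replace (- (-4 * (q * (1 - q)))) with (4 * (q * (1 - q))) by ring;
        apply Rmult_le_compat_l; lra).
  assert (q * (1 - q) * tfun mu s <= 1) by nra.
  lra.
Qed.

Lemma Rabs_dphi0_le s : 0 <= s -> Rabs (dphi0 mu s) <= 4 * s / mu ^ 2.
Proof.
  intros Hs. assert (Hq := qfun_pos s). assert (Hq1 := qfun_le_1 s).
  assert (Hm : 0 < / mu ^ 2) by (apply Rinv_0_lt_compat; nra).
  assert (Hqq : 0 <= qfun mu s ^ 2 <= 1) by (split; nra).
  unfold dphi0, Rdiv. set (q2 := qfun mu s ^ 2) in *. set (m := / mu ^ 2) in *.
  assert (Hsm : 0 <= s * m) by (apply Rmult_le_pos; lra).
  assert (s * m * q2 <= s * m * 1) by (apply Rmult_le_compat_l; lra).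
  rewrite Rabs_left1 by nra. nra.
Qed.

Lemma tfun_ge_near s : s ^ 2 <= mu ^ 2 / 4 -> 4 / 5 * (s ^ 2 / mu ^ 2) <= tfun mu s.
Proof.
  intros Hs. eapply Rle_trans; [|apply tfun_ge].
  assert (Hx : s ^ 2 / mu ^ 2 <= 1 / 4)
    by (apply Rmult_le_reg_r with (mu ^ 2); [nra|]; field_simplify; lra).
  generalize (sq_div_nonneg s). set (x := s ^ 2 / mu ^ 2) in *. intros Hx0.
  apply Rmult_le_reg_r with (1 + x); [lra|].
  replace (x / (1 + x) * (1 + x)) with x by (field; lra). nra.
Qed.

Lemma tfun_ge_far s : mu ^ 2 / 4 <= s ^ 2 -> 1 / 5 <= tfun mu s.
Proof.
  intros Hs. eapply Rle_trans; [|apply tfun_ge].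
  assert (Hx : 1 / 4 <= s ^ 2 / mu ^ 2)
    by (apply Rmult_le_reg_r with (mu ^ 2); [nra|]; field_simplify; lra).
  set (x := s ^ 2 / mu ^ 2) in *.
  apply Rmult_le_reg_r with (1 + x); [lra|].
  replace (x / (1 + x) * (1 + x)) with x by (field; lra). lra.
Qed.

Lemma dtfun_ge_near s : 0 <= s -> s ^ 2 <= mu ^ 2 / 4 -> 8 / 5 * (s / mu ^ 2) <= dtfun mu s.
Proof.
  intros Hs0 Hs. unfold dtfun. assert (H45 := qfun_ge_4_5 s Hs).
  replace (2 * s * qfun mu s / mu ^ 2) with (2 * qfun mu s * (s / mu ^ 2)) by (field; lra).
  assert (0 <= s / mu ^ 2) by (apply Rdiv_le_0_compat; nra). nra.
Qed.

End BubbleProfile.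

(** * Estimates for the linearized equation *)

Definition wronskian (P dP w wd : R -> R) (s : R) : R := s * (P s * wd s - w s * dP s).

Lemma is_derive_wronskian (P dP ddP w wd rho : R -> R) (s wdd Fs : R) :
  is_derive P s (dP s) -> is_derive dP s (ddP s) -> is_derive w s (wd s) ->
  is_derive wd s wdd -> wdd + wd s / s = Fs - rho s * w s ->
  dP s + s * ddP s + s * rho s * P s = 0 -> s <> 0 ->
  is_derive (wronskian P dP w wd) s (s * P s * Fs).
Proof.
  intros HP HdP Hw Hwd Hode Hker Hs.
  eapply is_derive_eq.
  { apply is_derive_Rmult; [apply is_derive_id|].
    apply is_derive_Rminus; apply is_derive_Rmult; eauto. }
  replace wdd with (Fs - rho s * w s - wd s / s) by lra.
  replace (dP s) with (- s * ddP s - s * rho s * P s) by lra.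
  match goal with |- ?x = ?y => change (@eq R x y) end.
  change one with 1. field. auto.
Qed.

Lemma continuity_pt_wronskian (P dP w wd : R -> R) s dp ddp dw dwd :
  is_derive P s dp -> is_derive dP s ddp -> is_derive w s dw -> is_derive wd s dwd ->
  continuity_pt (wronskian P dP w wd) s.
Proof.
  intros. eapply is_derive_continuity_pt.
  apply is_derive_Rmult; [apply is_derive_id|].
  apply is_derive_Rminus; apply is_derive_Rmult; eauto.
Qed.

Lemma w_eq_wronskians mu (w wd : R -> R) r : 0 < mu -> 0 < r ->
  w r = phi1 mu r * wronskian (phi0 mu) (dphi0 mu) w wd r
        - phi0 mu r * wronskian (phi1 mu) (dphi1 mu) w wd r.
Proof.
  intros Hmu Hr. unfold wronskian.
  rewrite <- (Rmult_1_r (w r)) at 1. rewrite <- (wronskian_phi Hmu r Hr). ring.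
Qed.

Lemma wd_eq_wronskians mu (w wd : R -> R) r : 0 < mu -> 0 < r ->
  r * wd r = (r * dphi1 mu r) * wronskian (phi0 mu) (dphi0 mu) w wd r
             - (r * dphi0 mu r) * wronskian (phi1 mu) (dphi1 mu) w wd r.
Proof.
  intros Hmu Hr. unfold wronskian.
  rewrite <- (Rmult_1_r (r * wd r)) at 1. rewrite <- (wronskian_phi Hmu r Hr). ring.
Qed.

Definition lin_const (e : R) : R :=
  20 * ((1 / 2 + 4 / (1 - e)) + (15 + 8 * (2 + 4 / (1 - e)) / (1 - e)) + 1).

Lemma lin_const_ge_20 e : 0 < e < 1 -> 20 <= lin_const e.
Proof.
  intros He. unfold lin_const.
  assert (0 < 4 / (1 - e)) by (apply Rdiv_lt_0_compat; lra).
  assert (0 < 8 * (2 + 4 / (1 - e)) / (1 - e)) by (apply Rdiv_lt_0_compat; lra). lra.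
Qed.

Section LinearEstimates.

Context {mu r1 e a b : R} {w wd F : R -> R}.
Hypotheses (mu_pos : 0 < mu) (r1_ge0 : 0 <= r1) (e_bounds : 0 < e < 1)
  (a_ge0 : 0 <= a) (b_ge0 : 0 <= b).
Hypothesis w_deriv : forall s, 0 <= s <= r1 -> is_derive w s (wd s).
Hypothesis wd_deriv : forall s, 0 <= s <= r1 -> ex_derive wd s.
Hypothesis w_ode : forall s, 0 < s < r1 -> Derive wd s + wd s / s = F s - potential mu s * w s.
Hypothesis w_0 : w 0 = 0.
Hypothesis wd_0 : wd 0 = 0.
Hypothesis F_bound : forall s, 0 < s < r1 ->
  Rabs (F s) <= a + b * potential mu s * exp (e * tfun mu s).

Let W0 := wronskian (phi0 mu) (dphi0 mu) w wd.
Let W1 := wronskian (phi1 mu) (dphi1 mu) w wd.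
Let alpha := a / 2 + 4 * b / mu ^ 2.
Let K0 := 1 / 2 + 4 / (1 - e).
Let K2 := 2 + 4 / (1 - e).
Let K5 := 15 + 8 * K2 / (1 - e).

Lemma alpha_nonneg : 0 <= alpha.
Proof. unfold alpha. assert (0 <= 4 * b / mu ^ 2) by (apply Rdiv_le_0_compat; nra). lra. Qed.

Lemma is_derive_W0 s : 0 < s < r1 -> is_derive W0 s (s * phi0 mu s * F s).
Proof.
  intros Hs.
  apply (is_derive_wronskian _ _ (ddphi0 mu) _ _ (potential mu) s (Derive wd s)).
  - apply is_derive_phi0; auto.
  - apply is_derive_dphi0; auto.
  - apply w_deriv. lra.
  - apply Derive_correct, wd_deriv. lra.
  - apply w_ode, Hs.
  - apply phi0_kernel; auto.
  - lra.
Qed.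

Lemma is_derive_W1 s : 0 < s < r1 -> is_derive W1 s (s * phi1 mu s * F s).
Proof.
  intros Hs.
  apply (is_derive_wronskian _ _ (ddphi1 mu) _ _ (potential mu) s (Derive wd s)).
  - apply is_derive_phi1; auto; lra.
  - apply is_derive_dphi1; auto; lra.
  - apply w_deriv. lra.
  - apply Derive_correct, wd_deriv. lra.
  - apply w_ode, Hs.
  - apply phi1_kernel; auto; lra.
  - lra.
Qed.

Lemma continuity_pt_W0 s : 0 <= s <= r1 -> continuity_pt W0 s.
Proof.
  intros Hs. apply continuity_pt_wronskian with (dp := dphi0 mu s) (ddp := ddphi0 mu s)
    (dw := wd s) (dwd := Derive wd s);
    [apply is_derive_phi0|apply is_derive_dphi0|apply w_deriv|apply Derive_correct, wd_deriv]; auto.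
Qed.

Lemma continuity_pt_W1 s : 0 < s <= r1 -> continuity_pt W1 s.
Proof.
  intros Hs. apply continuity_pt_wronskian with (dp := dphi1 mu s) (ddp := ddphi1 mu s)
    (dw := wd s) (dwd := Derive wd s);
    [apply is_derive_phi1|apply is_derive_dphi1|apply w_deriv|apply Derive_correct, wd_deriv]; lra.
Qed.

Lemma Rabs_s_phi0_F_le s : 0 < s < r1 ->
  Rabs (s * phi0 mu s * F s) <= a * s + 4 * b * dtfun mu s * exp ((e - 1) * tfun mu s).
Proof.
  intros Hs. specialize (F_bound s Hs).
  rewrite exp_tfun_sub_1 by auto.
  assert (Hq := qfun_pos mu_pos s). assert (Hex := exp_pos (e * tfun mu s)).
  rewrite !Rabs_mult, (Rabs_right s) by lra.
  assert (Hp := Rabs_phi0_le_1 mu_pos s). assert (0 <= Rabs (phi0 mu s)) by apply Rabs_pos.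
  apply Rle_trans with (s * 1 * (a + b * potential mu s * exp (e * tfun mu s))).
  - apply Rmult_le_compat; auto using Rabs_pos; [nra|]. apply Rmult_le_compat_l; lra.
  - unfold potential, dtfun. right. field. lra.
Qed.

Lemma Rabs_W0_le r : 0 <= r <= r1 ->
  Rabs (W0 r) <= a * r ^ 2 / 2 + 4 * b / (1 - e) * (1 - exp ((e - 1) * tfun mu r)).
Proof.
  intros Hr.
  set (H := fun y => a * y ^ 2 / 2 - 4 * b / (1 - e) * exp ((e - 1) * tfun mu y)).
  assert (HH : forall s, is_derive H s (a * s + 4 * b * dtfun mu s * exp ((e - 1) * tfun mu s))).
  { intros s. unfold H. eapply is_derive_eq.
    - apply is_derive_Rminus; [auto_derive; auto|].
      apply is_derive_scal with (k := 4 * b / (1 - e)), (is_derive_exp_tfun mu_pos).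
    - simpl. field. lra. }
  replace (a * r ^ 2 / 2 + 4 * b / (1 - e) * (1 - exp ((e - 1) * tfun mu r))) with (H r - H 0)
    by (unfold H; rewrite tfun_0, Rmult_0_r, exp_0 by auto; field; lra).
  replace (W0 r) with (W0 r - W0 0) by (unfold W0, wronskian; ring).
  apply Rabs_increment_le with (df := fun s => s * phi0 mu s * F s)
    (dH := fun s => a * s + 4 * b * dtfun mu s * exp ((e - 1) * tfun mu s)); try lra.
  - intros s Hs. apply is_derive_W0. lra.
  - intros s Hs. apply HH.
  - intros s Hs. apply continuity_pt_W0. lra.
  - intros s Hs. eapply is_derive_continuity_pt, HH.
  - intros s Hs. apply Rabs_s_phi0_F_le. lra.
Qed.

Lemma Rabs_W0_le_sq r : 0 <= r <= r1 -> Rabs (W0 r) <= alpha * r ^ 2.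
Proof.
  intros Hr. eapply Rle_trans; [apply Rabs_W0_le, Hr|].
  assert (H1 := exp_ineq1_le ((e - 1) * tfun mu r)).
  assert (H2 := tfun_le mu_pos r). assert (H3 := tfun_nonneg mu_pos r).
  assert (H4 : 4 * b / (1 - e) * (1 - exp ((e - 1) * tfun mu r))
               <= 4 * b / (1 - e) * ((1 - e) * (r ^ 2 / mu ^ 2)))
    by (apply Rmult_le_compat_l; [apply Rdiv_le_0_compat|]; nra).
  replace (4 * b / (1 - e) * ((1 - e) * (r ^ 2 / mu ^ 2))) with (4 * b / mu ^ 2 * r ^ 2) in H4
    by (field; lra).
  unfold alpha. lra.
Qed.

Lemma Rabs_W0_le_K0 r : 0 <= r <= r1 -> Rabs (W0 r) <= a * r ^ 2 / 2 + 4 * b / (1 - e).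
Proof.
  intros Hr. eapply Rle_trans; [apply Rabs_W0_le, Hr|].
  assert (H1 := exp_pos ((e - 1) * tfun mu r)).
  assert (0 <= 4 * b / (1 - e)) by (apply Rdiv_le_0_compat; lra). nra.
Qed.

Lemma Rabs_w_le_near r : 0 <= r <= r1 -> r ^ 2 <= mu ^ 2 / 4 -> Rabs (w r) <= 25 / 18 * alpha * r ^ 2.
Proof.
  intros Hr Hrm. assert (Hal := alpha_nonneg).
  assert (Hp : forall s, 0 <= s <= r -> 3 / 5 <= phi0 mu s)
    by (intros s Hs; apply (phi0_ge_3_5 mu_pos); nra).
  set (f := fun y => w y / phi0 mu y).
  assert (Hfd : forall s, 0 <= s <= r ->
    is_derive f s ((wd s * phi0 mu s - w s * dphi0 mu s) / phi0 mu s ^ 2)).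
  { intros s Hs. apply is_derive_div; [apply w_deriv; lra|apply (is_derive_phi0 mu_pos)|].
    specialize (Hp s Hs). lra. }
  assert (Hf : Rabs (f r - f 0) <= 25 / 18 * alpha * r ^ 2 - 25 / 18 * alpha * 0 ^ 2).
  { apply Rabs_increment_le with (H := fun s => 25 / 18 * alpha * s ^ 2)
      (dH := fun s => 25 / 9 * alpha * s)
      (df := fun s => (wd s * phi0 mu s - w s * dphi0 mu s) / phi0 mu s ^ 2); try lra.
    - intros s Hs; apply Hfd; lra.
    - intros s Hs. auto_derive; auto. field.
    - intros s Hs. eapply is_derive_continuity_pt, Hfd; lra.
    - intros s Hs. eapply is_derive_continuity_pt with (l := 25 / 9 * alpha * s).
      auto_derive; auto. field.
    - intros s Hs. specialize (Hp s ltac:(lra)).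
      assert (HW := Rabs_W0_le_sq s ltac:(lra)). unfold W0, wronskian in HW.
      replace ((wd s * phi0 mu s - w s * dphi0 mu s) / phi0 mu s ^ 2)
        with (s * (phi0 mu s * wd s - w s * dphi0 mu s) / (s * phi0 mu s ^ 2))
        by (field; repeat split; lra).
      assert (Hden : 0 < s * phi0 mu s ^ 2) by (apply Rmult_lt_0_compat; [lra|apply pow_lt; lra]).
      unfold Rdiv. rewrite Rabs_mult, Rabs_inv, (Rabs_right (s * phi0 mu s ^ 2)) by lra.
      apply Rle_trans with (alpha * s ^ 2 * / (s * phi0 mu s ^ 2)).
      + apply Rmult_le_compat_r; [apply Rlt_le, Rinv_0_lt_compat|]; lra.
      + replace (alpha * s ^ 2 * / (s * phi0 mu s ^ 2)) with (alpha * s * / (phi0 mu s ^ 2))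
          by (field; repeat split; lra).
        apply Rle_trans with (alpha * s * / ((3 / 5) ^ 2)); [|lra].
        apply Rmult_le_compat_l; [nra|]. apply Rinv_le_contravar; nra. }
  assert (Hf0 : f 0 = 0) by (unfold f; rewrite w_0; unfold Rdiv; ring).
  rewrite Hf0, Rminus_0_r in Hf.
  replace (w r) with (f r * phi0 mu r) by (unfold f; field; specialize (Hp r ltac:(lra)); lra).
  rewrite Rabs_mult. assert (H1 := Rabs_phi0_le_1 mu_pos r). assert (H2 := Rabs_pos (f r)).
  nra.
Qed.

Lemma Rabs_wd_le_near r : 0 < r <= r1 -> r ^ 2 <= mu ^ 2 / 4 ->
  Rabs (wd r) <= 5 / 3 * (43 / 18) * alpha * r.
Proof.
  intros Hr Hrm. assert (Hal := alpha_nonneg).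
  assert (Hp := phi0_ge_3_5 mu_pos r Hrm).
  assert (HW := Rabs_W0_le_sq r ltac:(lra)).
  assert (Hw := Rabs_w_le_near r ltac:(lra) Hrm).
  assert (Hd := Rabs_dphi0_le mu_pos r ltac:(lra)).
  unfold W0, wronskian in HW. set (W := r * (phi0 mu r * wd r - w r * dphi0 mu r)) in HW.
  replace (wd r) with ((W / r + w r * dphi0 mu r) / phi0 mu r) by (unfold W; field; lra).
  assert (Hnum : Rabs (W / r + w r * dphi0 mu r) <= 43 / 18 * alpha * r).
  { eapply Rle_trans; [apply Rabs_triang|].
    rewrite Rabs_mult. unfold Rdiv. rewrite Rabs_mult, Rabs_inv, (Rabs_right r) by lra.
    assert (Rabs W * / r <= alpha * r).
    { apply Rle_trans with (alpha * r ^ 2 * / r); [|right; field; lra].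
      apply Rmult_le_compat_r; [apply Rlt_le, Rinv_0_lt_compat|]; lra. }
    assert (Hr2 : r ^ 2 * / mu ^ 2 <= 1 / 4)
      by (apply Rmult_le_reg_r with (mu ^ 2); [nra|]; field_simplify; lra).
    assert (Rabs (w r) * Rabs (dphi0 mu r) <= 25 / 18 * alpha * r ^ 2 * (4 * r / mu ^ 2))
      by (apply Rmult_le_compat; auto using Rabs_pos).
    assert (25 / 18 * alpha * r ^ 2 * (4 * r / mu ^ 2) <= 25 / 18 * alpha * r); [|lra].
    replace (25 / 18 * alpha * r ^ 2 * (4 * r / mu ^ 2))
      with (25 / 18 * alpha * r * (4 * (r ^ 2 * / mu ^ 2))) by (field; lra).
    assert (0 <= 25 / 18 * alpha * r) by nra. nra. }
  unfold Rdiv at 1. rewrite Rabs_mult, Rabs_inv, (Rabs_right (phi0 mu r)) by lra.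
  apply Rle_trans with (43 / 18 * alpha * r * / (3 / 5)); [|right; field].
  apply Rmult_le_compat; auto using Rabs_pos.
  - apply Rlt_le, Rinv_0_lt_compat. lra.
  - apply Rinv_le_contravar; lra.
Qed.

Lemma two_plus_half_le_exp t : 0 <= t -> 2 + t / 2 <= K2 * exp ((1 - e) / 2 * t).
Proof.
  intros Ht. assert (H := one_plus_le_exp_scaled t ((1 - e) / 2) Ht ltac:(lra)).
  replace (1 / ((1 - e) / 2)) with (2 / (1 - e)) in H by (field; lra).
  unfold K2. replace (2 + 4 / (1 - e)) with (2 * (1 + 2 / (1 - e))) by (field; lra).
  assert (0 < exp ((1 - e) / 2 * t)) by apply exp_pos. nra.
Qed.

Lemma Rabs_s_phi1_F_le r s : mu / 2 < s < r -> r <= r1 ->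
  Rabs (s * phi1 mu s * F s)
  <= a * (2 + tfun mu r / 2) * s + 4 * b * K2 * dtfun mu s * exp ((e - 1) / 2 * tfun mu s).
Proof.
  intros Hs Hr. specialize (F_bound s ltac:(lra)).
  assert (Hq := qfun_pos mu_pos s). assert (Hex := exp_pos (e * tfun mu s)).
  rewrite !Rabs_mult, (Rabs_right s) by lra.
  assert (Hp := Rabs_phi1_le mu_pos s ltac:(lra)).
  assert (Htm := tfun_le_tfun mu_pos s r ltac:(lra)).
  assert (Hts := tfun_nonneg mu_pos s).
  assert (HFp := Rabs_pos (F s)). assert (Hpp := Rabs_pos (phi1 mu s)).
  assert (Hrho := potential_nonneg mu_pos s).
  assert (H1 : s * Rabs (phi1 mu s) * Rabs (F s)
               <= s * (2 + tfun mu s / 2) * (a + b * potential mu s * exp (e * tfun mu s)))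
    by (apply Rmult_le_compat; nra).
  assert (Hlin := two_plus_half_le_exp (tfun mu s) Hts).
  assert (H2 : s * (2 + tfun mu s / 2) * a <= a * (2 + tfun mu r / 2) * s)
    by (assert (0 <= s * a) by nra; nra).
  assert (H3 : s * (2 + tfun mu s / 2) * (b * potential mu s * exp (e * tfun mu s)) <=
               s * (K2 * exp ((1 - e) / 2 * tfun mu s)) * (b * potential mu s * exp (e * tfun mu s)))
    by (apply Rmult_le_compat_r; [apply Rmult_le_pos; [apply Rmult_le_pos|]|
        apply Rmult_le_compat_l]; lra).
  assert (s * (K2 * exp ((1 - e) / 2 * tfun mu s)) * (b * potential mu s * exp (e * tfun mu s))
          = 4 * b * K2 * dtfun mu s * exp ((e - 1) / 2 * tfun mu s)); [|lra].
  replace ((e - 1) / 2) with ((1 + e) / 2 - 1) by field. rewrite exp_tfun_sub_1 by auto.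
  replace (exp ((1 + e) / 2 * tfun mu s)) with (exp ((1 - e) / 2 * tfun mu s) * exp (e * tfun mu s))
    by (rewrite <- exp_plus; f_equal; field).
  unfold potential, dtfun. field. lra.
Qed.

Lemma Rabs_W1_increment_le r : mu / 2 <= r <= r1 ->
  Rabs (W1 r - W1 (mu / 2)) <= a * (2 + tfun mu r / 2) * r ^ 2 / 2 + 8 * b * K2 / (1 - e).
Proof.
  intros Hr.
  assert (HK2 : 0 < K2) by (unfold K2; assert (0 < 4 / (1 - e)) by (apply Rdiv_lt_0_compat; lra); lra).
  set (A := a * (2 + tfun mu r / 2)).
  set (k := 8 * b * K2 / (1 - e)).
  assert (Hk : 0 <= k) by (unfold k; apply Rdiv_le_0_compat; nra).
  assert (HA : 0 <= A) by (unfold A; assert (Ht := tfun_nonneg mu_pos r); nra).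
  set (H := fun y => A * y ^ 2 / 2 - k * exp ((e - 1) / 2 * tfun mu y)).
  assert (HH : forall s, is_derive H s (A * s + 4 * b * K2 * dtfun mu s * exp ((e - 1) / 2 * tfun mu s))).
  { intros s. unfold H. eapply is_derive_eq.
    - apply is_derive_Rminus; [auto_derive; auto|].
      apply is_derive_scal with (k := k), (is_derive_exp_tfun mu_pos).
    - simpl. unfold k. field. lra. }
  apply Rle_trans with (H r - H (mu / 2)).
  - apply Rabs_increment_le with (df := fun s => s * phi1 mu s * F s)
      (dH := fun s => A * s + 4 * b * K2 * dtfun mu s * exp ((e - 1) / 2 * tfun mu s)); try lra.
    + intros s Hs. apply is_derive_W1. lra.
    + intros s Hs. apply HH.
    + intros s Hs. apply continuity_pt_W1. lra.
    + intros s Hs. eapply is_derive_continuity_pt, HH.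
    + intros s Hs. apply Rabs_s_phi1_F_le; lra.
  - unfold H.
    assert (exp ((e - 1) / 2 * tfun mu (mu / 2)) <= 1).
    { rewrite <- exp_0 at 2. apply exp_le_exp. assert (Ht := tfun_nonneg mu_pos (mu / 2)). nra. }
    assert (Hr' := exp_pos ((e - 1) / 2 * tfun mu r)).
    assert (0 <= A * (mu / 2) ^ 2 / 2) by (assert (Hsq := pow2_ge_0 (mu / 2)); nra).
    nra.
Qed.

Let L := a * (mu ^ 2 + r1 ^ 2) + b.

Lemma L_nonneg : 0 <= L.
Proof. unfold L. nra. Qed.

Lemma alpha_mu_sq_le : alpha * mu ^ 2 <= 4 * L.
Proof.
  unfold alpha, L. replace ((a / 2 + 4 * b / mu ^ 2) * mu ^ 2) with (a * mu ^ 2 / 2 + 4 * b)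
    by (field; lra). nra.
Qed.

Lemma linear_estimate_near r : 0 <= r <= r1 -> r ^ 2 <= mu ^ 2 / 4 ->
  Rabs (w r) <= lin_const e * L * tfun mu r /\ Rabs (wd r) <= lin_const e * L * dtfun mu r.
Proof.
  intros Hr Hrm.
  assert (HKL := lin_const_ge_20 e e_bounds).
  assert (Hal := alpha_mu_sq_le). assert (Hal0 := alpha_nonneg). assert (HL0 := L_nonneg).
  split.
  - assert (Ht45 := tfun_ge_near mu_pos r Hrm). assert (Hx0 := sq_div_nonneg mu_pos r).
    eapply Rle_trans; [apply Rabs_w_le_near; auto|].
    replace (25 / 18 * alpha * r ^ 2) with (25 / 18 * (alpha * mu ^ 2) * (r ^ 2 / mu ^ 2))
      by (field; lra).
    apply Rle_trans with (25 / 18 * (4 * L) * (5 / 4 * tfun mu r)); [apply Rmult_le_compat; nra|].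
    assert (0 <= L * tfun mu r) by (apply Rmult_le_pos; auto using tfun_nonneg). nra.
  - destruct (Req_dec r 0) as [->|Hr0].
    + rewrite wd_0, Rabs_R0, (dtfun_0 mu_pos). lra.
    + assert (Hdt := dtfun_ge_near mu_pos r ltac:(lra) Hrm).
      eapply Rle_trans; [apply Rabs_wd_le_near; auto; lra|].
      replace (5 / 3 * (43 / 18) * alpha * r) with (5 / 3 * (43 / 18) * (alpha * mu ^ 2) * (r / mu ^ 2))
        by (field; lra).
      assert (0 <= r / mu ^ 2) by (apply Rdiv_le_0_compat; nra).
      apply Rle_trans with (5 / 3 * (43 / 18) * (4 * L) * (5 / 8 * dtfun mu r));
        [apply Rmult_le_compat; nra|].
      assert (0 <= L * dtfun mu r) by (apply Rmult_le_pos; [|apply dtfun_nonneg]; auto; lra). nra.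
Qed.

Lemma K0_K5_pos : 0 < K0 /\ 0 < K5.
Proof.
  unfold K0, K5, K2. assert (0 < 4 / (1 - e)) by (apply Rdiv_lt_0_compat; lra).
  assert (0 < 8 * (2 + 4 / (1 - e)) / (1 - e)) by (apply Rdiv_lt_0_compat; lra). lra.
Qed.

Lemma Rabs_W1_mu_half_le : mu / 2 <= r1 -> Rabs (W1 (mu / 2)) <= 15 * L.
Proof.
  intros Hc1. set (c := mu / 2) in *.
  assert (Hc : c ^ 2 <= mu ^ 2 / 4) by (unfold c; right; field).
  assert (Hc0 : 0 < c) by (unfold c; lra).
  assert (Hwc := Rabs_w_le_near c ltac:(lra) Hc).
  assert (Hwdc := Rabs_wd_le_near c ltac:(lra) Hc).
  assert (Hal := alpha_nonneg).
  assert (Halc : alpha * c ^ 2 <= L)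
    by (assert (Ha := alpha_mu_sq_le); unfold c; replace (alpha * (mu / 2) ^ 2) with (alpha * mu ^ 2 / 4) by field; lra).
  unfold W1, wronskian.
  replace (c * (phi1 mu c * wd c - w c * dphi1 mu c))
    with (phi1 mu c * (c * wd c) - w c * (c * dphi1 mu c)) by ring.
  eapply Rle_trans; [apply Rabs_triang|]. rewrite Rabs_Ropp, !Rabs_mult, (Rabs_right c) by lra.
  assert (Hp1 := Rabs_phi1_le mu_pos c ltac:(unfold c; lra)).
  assert (Htc := tfun_le mu_pos c).
  assert (Hcc : c ^ 2 / mu ^ 2 = 1 / 4) by (unfold c; field; lra).
  assert (Hd1 := Rabs_s_mul_dphi1_le mu_pos c ltac:(unfold c; lra)).
  rewrite Rabs_mult, (Rabs_right c) in Hd1 by lra.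
  assert (Rabs (phi1 mu c) * (c * Rabs (wd c)) <= (2 + 1 / 8) * (5 / 3 * (43 / 18) * alpha * c ^ 2)).
  { apply Rmult_le_compat; try apply Rabs_pos; [apply Rmult_le_pos; [lra|apply Rabs_pos]|lra|].
    replace (5 / 3 * (43 / 18) * alpha * c ^ 2) with (c * (5 / 3 * (43 / 18) * alpha * c)) by ring.
    apply Rmult_le_compat_l; lra. }
  assert (Rabs (w c) * (c * Rabs (dphi1 mu c)) <= (25 / 18 * alpha * c ^ 2) * 4)
    by (apply Rmult_le_compat; auto using Rabs_pos; apply Rmult_le_pos; [lra|apply Rabs_pos]).
  assert (0 <= alpha * c ^ 2) by nra.
  nra.
Qed.

Lemma Rabs_W0_le_far r : 0 <= r <= r1 -> Rabs (W0 r) <= K0 * L.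
Proof.
  intros Hr. eapply Rle_trans; [apply Rabs_W0_le_K0, Hr|].
  assert (a * r ^ 2 <= L) by (unfold L; assert (a * r ^ 2 <= a * r1 ^ 2) by (apply Rmult_le_compat_l; nra); nra).
  assert (4 * b / (1 - e) <= 4 * L / (1 - e))
    by (unfold Rdiv; apply Rmult_le_compat_r; [apply Rlt_le, Rinv_0_lt_compat|unfold L]; nra).
  unfold K0. replace ((1 / 2 + 4 / (1 - e)) * L) with (L / 2 + 4 * L / (1 - e)) by (field; lra). lra.
Qed.

Lemma Rabs_W1_le_far r : mu / 2 <= r <= r1 -> Rabs (W1 r) <= (K5 + 1 + tfun mu r / 4) * L.
Proof.
  intros Hr.
  assert (H1 := Rabs_W1_increment_le r Hr). assert (H2 := Rabs_W1_mu_half_le ltac:(lra)).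
  assert (8 * b * K2 / (1 - e) <= 8 * K2 / (1 - e) * L).
  { replace (8 * b * K2 / (1 - e)) with (8 * K2 / (1 - e) * b) by (field; lra).
    apply Rmult_le_compat_l; [|unfold L; nra].
    unfold K2. assert (0 < 4 / (1 - e)) by (apply Rdiv_lt_0_compat; lra). apply Rdiv_le_0_compat; lra. }
  assert (a * (2 + tfun mu r / 2) * r ^ 2 / 2 <= (1 + tfun mu r / 4) * L).
  { replace (a * (2 + tfun mu r / 2) * r ^ 2 / 2) with ((1 + tfun mu r / 4) * (a * r ^ 2)) by field.
    assert (Ht := tfun_nonneg mu_pos r).
    apply Rmult_le_compat_l; [lra|]. unfold L.
    assert (a * r ^ 2 <= a * r1 ^ 2) by (apply Rmult_le_compat_l; nra). nra. }
  replace (W1 r) with ((W1 r - W1 (mu / 2)) + W1 (mu / 2)) by ring.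
  eapply Rle_trans; [apply Rabs_triang|]. unfold K5. nra.
Qed.

Lemma Rabs_w_le_far r : mu / 2 <= r <= r1 -> Rabs (w r) <= lin_const e * L * tfun mu r.
Proof.
  intros Hr.
  assert (HKL : lin_const e = 20 * (K0 + K5 + 1)) by reflexivity.
  destruct K0_K5_pos as [HK0 HK5]. assert (HL0 := L_nonneg).
  assert (Ht := tfun_nonneg mu_pos r). assert (Ht5 := tfun_ge_far mu_pos r ltac:(nra)).
  assert (HW0 := Rabs_W0_le_far r ltac:(lra)). assert (HW1 := Rabs_W1_le_far r Hr).
  rewrite (w_eq_wronskians mu w wd r mu_pos ltac:(lra)). fold W0 W1.
  eapply Rle_trans; [apply Rabs_triang|]. rewrite Rabs_Ropp, !Rabs_mult.
  assert (Hp1 := Rabs_phi1_le mu_pos r ltac:(lra)). assert (Hp0 := Rabs_phi0_le_1 mu_pos r).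
  assert (Rabs (phi1 mu r) * Rabs (W0 r) <= (2 + tfun mu r / 2) * (K0 * L))
    by (apply Rmult_le_compat; auto using Rabs_pos).
  assert (Rabs (phi0 mu r) * Rabs (W1 r) <= 1 * ((K5 + 1 + tfun mu r / 4) * L))
    by (apply Rmult_le_compat; auto using Rabs_pos).
  assert ((2 + tfun mu r / 2) * (K0 * L) + 1 * ((K5 + 1 + tfun mu r / 4) * L)
          <= lin_const e * L * tfun mu r); [|lra].
  rewrite HKL. assert (0 <= K0 * L) by nra. assert (0 <= K5 * L) by nra.
  assert (0 <= L * tfun mu r) by nra.
  assert (K0 * L * 2 <= K0 * L * (10 * tfun mu r)) by (apply Rmult_le_compat_l; lra).
  assert ((K5 + 1) * L * 1 <= (K5 + 1) * L * (5 * tfun mu r)) by (apply Rmult_le_compat_l; nra).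
  nra.
Qed.

Lemma Rabs_s_mul_wd_le_far r : mu / 2 <= r <= r1 -> Rabs (r * wd r) <= (4 * K0 + K5 + 2) * L.
Proof.
  intros Hr.
  destruct K0_K5_pos as [HK0 HK5]. assert (HL0 := L_nonneg).
  assert (Ht := tfun_nonneg mu_pos r).
  assert (Hq := qfun_pos mu_pos r). assert (Hq1 := qfun_le_1 mu_pos r).
  assert (HW0 := Rabs_W0_le_far r ltac:(lra)). assert (HW1 := Rabs_W1_le_far r Hr).
  rewrite (wd_eq_wronskians mu w wd r mu_pos ltac:(lra)). fold W0 W1.
  rewrite (s_mul_dphi0 mu_pos).
  eapply Rle_trans; [apply Rabs_triang|].
  rewrite Rabs_Ropp, (Rabs_mult (r * dphi1 mu r)), (Rabs_mult (-4 * _)), (Rabs_mult (-4)).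
  assert (Hd1 := Rabs_s_mul_dphi1_le mu_pos r ltac:(lra)).
  assert (Hqq : 0 <= qfun mu r * (1 - qfun mu r)) by (apply Rmult_le_pos; lra).
  assert (H41 := qfun_mul_1_sub_le (mu := mu) r). assert (Hqt := qfun_mul_tfun_le mu_pos r).
  rewrite (Rabs_left (-4)), (Rabs_right (qfun mu r * (1 - qfun mu r))) by lra.
  assert (Rabs (r * dphi1 mu r) * Rabs (W0 r) <= 4 * (K0 * L))
    by (apply Rmult_le_compat; auto using Rabs_pos).
  assert (- -4 * (qfun mu r * (1 - qfun mu r)) * Rabs (W1 r)
          <= 4 * (qfun mu r * (1 - qfun mu r)) * ((K5 + 1 + tfun mu r / 4) * L))
    by (replace (- -4) with 4 by ring; apply Rmult_le_compat_l; lra).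
  assert (qfun mu r * (1 - qfun mu r) * tfun mu r <= 1).
  { assert (0 <= qfun mu r * tfun mu r) by (apply Rmult_le_pos; lra).
    assert (qfun mu r * tfun mu r * (1 - qfun mu r) <= qfun mu r * tfun mu r * 1)
      by (apply Rmult_le_compat_l; lra). nra. }
  assert (4 * (qfun mu r * (1 - qfun mu r)) * ((K5 + 1) * L) <= 1 * ((K5 + 1) * L))
    by (apply Rmult_le_compat_r; nra).
  assert (qfun mu r * (1 - qfun mu r) * tfun mu r * L <= 1 * L)
    by (apply Rmult_le_compat_r; lra).
  nra.
Qed.

Lemma Rabs_wd_le_far r : mu / 2 <= r <= r1 -> Rabs (wd r) <= lin_const e * L * dtfun mu r.
Proof.
  intros Hr.
  assert (HKL : lin_const e = 20 * (K0 + K5 + 1)) by reflexivity.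
  destruct K0_K5_pos as [HK0 HK5]. assert (HL0 := L_nonneg).
  assert (Hrd := Rabs_s_mul_wd_le_far r Hr).
  assert (Hq45 := qfun_le_4_5 mu_pos r ltac:(nra)).
  rewrite Rabs_mult, (Rabs_right r) in Hrd by lra.
  apply Rmult_le_reg_l with r; [lra|].
  apply Rle_trans with ((4 * K0 + K5 + 2) * L); auto.
  replace (r * (lin_const e * L * dtfun mu r)) with (lin_const e * L * (r * dtfun mu r)) by ring.
  rewrite (s_mul_dtfun mu_pos), HKL.
  assert (0 <= (K0 + K5 + 1) * L) by nra.
  assert ((K0 + K5 + 1) * L * (2 / 5) <= (K0 + K5 + 1) * L * (2 * (1 - qfun mu r)))
    by (apply Rmult_le_compat_l; lra).
  nra.
Qed.

Lemma linear_estimate r : 0 <= r <= r1 ->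
  Rabs (w r) <= lin_const e * (a * (mu ^ 2 + r1 ^ 2) + b) * tfun mu r /\
  Rabs (wd r) <= lin_const e * (a * (mu ^ 2 + r1 ^ 2) + b) * dtfun mu r.
Proof.
  intros Hr. fold L.
  destruct (Rle_lt_dec (r ^ 2) (mu ^ 2 / 4)).
  - now apply linear_estimate_near.
  - split; [apply Rabs_w_le_far|apply Rabs_wd_le_far]; nra.
Qed.

End LinearEstimates.

(** * The nonlinear remainder *)

Lemma Rpower_between y a : 0 < y -> 0 <= a <= 1 ->
  (1 <= y -> 1 <= Rpower y a <= y) /\ (y <= 1 -> y <= Rpower y a <= 1).
Proof.
  intros Hy Ha. unfold Rpower. split; intros H.
  - assert (0 <= ln y) by (rewrite <- ln_1; apply ln_le; lra).
    split; [rewrite <- exp_0 | rewrite <- (exp_ln y) at 2 by lra]; apply exp_le_exp; nra.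
  - assert (ln y <= 0) by (rewrite <- ln_1; apply ln_le; lra).
    split; [rewrite <- (exp_ln y) at 1 by lra | rewrite <- exp_0]; apply exp_le_exp; nra.
Qed.

Lemma Rabs_Rpower_sub_1_le y a : 0 < y -> 0 <= a <= 1 -> Rabs (Rpower y a - 1) <= Rabs (y - 1).
Proof.
  intros Hy Ha. destruct (Rpower_between y a Hy Ha) as [H1 H2].
  destruct (Rle_dec 1 y) as [Hy1|Hy1].
  - specialize (H1 Hy1). rewrite !Rabs_right by lra. lra.
  - specialize (H2 ltac:(lra)). rewrite !Rabs_left1 by lra. lra.
Qed.

Lemma is_derive_Rpower y p : 0 < y -> is_derive (fun z => Rpower z p) y (p * Rpower y (p - 1)).
Proof. intros Hy. apply is_derive_Reals, derivable_pt_lim_power, Hy. Qed.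

Lemma Rpower_ge_base g p : 1 <= g -> 1 <= p -> g <= Rpower g p.
Proof.
  intros Hg Hp. rewrite <- (Rpower_1 g) at 1 by lra. apply Rle_Rpower; lra.
Qed.

Lemma Rpower_pred_mul g p : 0 < g -> Rpower g (p - 1) * g = Rpower g p.
Proof.
  intros Hg. rewrite <- (Rpower_1 g) at 2 by lra. rewrite <- Rpower_plus. f_equal. ring.
Qed.

Definition rpow_rem (p v : R) : R := Rpower (1 + v) p - 1 - p * v.

Lemma is_derive_rpow_rem p v : -1 < v -> is_derive (rpow_rem p) v (p * (Rpower (1 + v) (p - 1) - 1)).
Proof.
  intros Hv. unfold rpow_rem. eapply is_derive_eq.
  - apply is_derive_Rminus; [apply is_derive_Rminus|].
    + apply (is_derive_comp (fun z => Rpower z p) (fun z => 1 + z)); [apply is_derive_Rpower; lra|].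
      auto_derive; auto.
    + apply is_derive_const.
    + apply is_derive_scal, is_derive_id.
  - simpl. unfold scal, zero; simpl. unfold mult, one; simpl. ring.
Qed.

Lemma Rabs_derive_rpow_rem_le p c : 1 <= p <= 2 -> -1 < c ->
  Rabs (p * (Rpower (1 + c) (p - 1) - 1)) <= 2 * Rabs c.
Proof.
  intros Hp Hc. rewrite Rabs_mult, (Rabs_right p) by lra.
  assert (Ha := Rabs_Rpower_sub_1_le (1 + c) (p - 1) ltac:(lra) ltac:(lra)).
  replace (1 + c - 1) with c in Ha by ring.
  assert (0 <= Rabs (Rpower (1 + c) (p - 1) - 1)) by apply Rabs_pos. nra.
Qed.

Lemma rpow_rem_bounds p v : 1 <= p <= 2 -> -1 < v -> 0 <= rpow_rem p v <= 2 * v ^ 2.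
Proof.
  intros Hp Hv.
  assert (Hmin : -1 < Rmin 0 v) by (unfold Rmin; destruct Rle_dec; lra).
  destruct (MVT_gen (rpow_rem p) 0 v (fun u => p * (Rpower (1 + u) (p - 1) - 1))) as [c [Hc E]].
  { intros u Hu. apply is_derive_rpow_rem. lra. }
  { intros u Hu. eapply is_derive_continuity_pt, is_derive_rpow_rem. lra. }
  replace (rpow_rem p 0) with 0 in E
    by (unfold rpow_rem, Rpower; rewrite Rplus_0_r, ln_1, Rmult_0_r, exp_0; ring).
  rewrite !Rminus_0_r in E. rewrite E.
  assert (Hc1 : -1 < c /\ Rabs c <= Rabs v /\ (0 <= v -> 0 <= c) /\ (v <= 0 -> c <= 0)).
  { unfold Rmin, Rmax in Hc. destruct Rle_dec.
    - rewrite !Rabs_right by lra. lra.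
    - rewrite !Rabs_left1 by lra. lra. }
  destruct (Rpower_between (1 + c) (p - 1) ltac:(lra) ltac:(lra)) as [H1 H2].
  split.
  - destruct (Rle_dec 0 v).
    + specialize (H1 ltac:(lra)). apply Rmult_le_pos; [apply Rmult_le_pos|]; lra.
    + specialize (H2 ltac:(lra)).
      replace (p * (Rpower (1 + c) (p - 1) - 1) * v)
        with ((p * (1 - Rpower (1 + c) (p - 1))) * (- v)) by ring.
      apply Rmult_le_pos; [apply Rmult_le_pos|]; lra.
  - apply Rle_trans with (Rabs (p * (Rpower (1 + c) (p - 1) - 1) * v)); [apply Rle_abs|].
    rewrite Rabs_mult, <- pow2_abs.
    assert (H := Rabs_derive_rpow_rem_le p c Hp (proj1 Hc1)).
    assert (0 <= Rabs v) by apply Rabs_pos. nra.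
Qed.

Lemma rpow_rem_lipschitz p u1 u2 : 1 <= p <= 2 -> -1 < u1 <= 1 -> -1 < u2 <= 1 ->
  Rabs (rpow_rem p u2 - rpow_rem p u1) <= 2 * Rabs (u2 - u1).
Proof.
  intros Hp H1 H2.
  assert (Hmin : -1 < Rmin u1 u2) by (unfold Rmin; destruct Rle_dec; lra).
  assert (Hmax : Rmax u1 u2 <= 1) by (unfold Rmax; destruct Rle_dec; lra).
  destruct (MVT_gen (rpow_rem p) u1 u2 (fun u => p * (Rpower (1 + u) (p - 1) - 1))) as [c [Hc E]].
  { intros u Hu. apply is_derive_rpow_rem. lra. }
  { intros u Hu. eapply is_derive_continuity_pt, is_derive_rpow_rem. lra. }
  rewrite E, Rabs_mult.
  assert (H := Rabs_derive_rpow_rem_le p c Hp ltac:(lra)).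
  assert (Rabs c <= 1) by (apply Rabs_le; lra).
  assert (0 <= Rabs (u2 - u1)) by apply Rabs_pos. nra.
Qed.

Lemma rpow_rem_neg_le p x : 1 <= p <= 2 -> 0 <= x < 1 -> rpow_rem p (- x) <= p * x ^ 2 / 2.
Proof.
  intros Hp Hx.
  set (k := fun s => 1 - p * s + p * s ^ 2 / 2 - Rpower (1 - s) p).
  assert (Hk : forall s, s < 1 -> is_derive k s (- p + p * s + p * Rpower (1 - s) (p - 1))).
  { intros s Hs. unfold k. eapply is_derive_eq.
    - apply is_derive_Rminus; [auto_derive; auto|].
      apply (is_derive_comp (fun z => Rpower z p) (fun z => 1 - z)); [apply is_derive_Rpower; lra|].
      auto_derive; auto.
    - simpl. unfold scal, mult; simpl. unfold mult; simpl. field. }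
  assert (Hle : k 0 <= k x).
  { apply le_of_derive_nonneg with (dh := fun s => - p + p * s + p * Rpower (1 - s) (p - 1)); [lra| | |].
    - intros s Hs. apply Hk. lra.
    - intros s Hs. eapply is_derive_continuity_pt, Hk. lra.
    - intros s Hs. destruct (Rpower_between (1 - s) (p - 1) ltac:(lra) ltac:(lra)) as [_ H2].
      specialize (H2 ltac:(lra)). nra. }
  unfold k in Hle. unfold rpow_rem.
  replace (1 - 0) with 1 in Hle by ring.
  replace (Rpower 1 p) with 1 in Hle by (unfold Rpower; rewrite ln_1, Rmult_0_r, exp_0; reflexivity).
  replace (1 + - x) with (1 - x) by ring. nra.
Qed.

Lemma nonlin_scaled_eq g p mu t v : 0 < g -> 1 <= p -> 0 < mu -> -1 < v ->
  nonlin (lam p mu g) p (g * (1 + v)) * (mu ^ 2 * Rpower g (p - 1) * p) / (8 * exp (-2 * t))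
  = exp ((p - 1) * ln (1 + v) + Rpower g p * rpow_rem p v + p * Rpower g p * v + 2 * t).
Proof.
  intros Hg Hp Hmu Hv.
  assert (Hb1 : Rpower (g * (1 + v)) (p - 1) = Rpower g (p - 1) * exp ((p - 1) * ln (1 + v))).
  { unfold Rpower. rewrite ln_mult, <- exp_plus by lra. f_equal. ring. }
  assert (Hb2 : Rpower (g * (1 + v)) p = Rpower g p * (rpow_rem p v + 1 + p * v)).
  { unfold rpow_rem. rewrite <- Rpower_mult_distr by lra. ring. }
  assert (Hg2 : Rpower g (2 * (p - 1)) = Rpower g (p - 1) * Rpower g (p - 1)).
  { rewrite <- Rpower_plus. f_equal. ring. }
  assert (HgP : 0 < Rpower g (p - 1)) by apply exp_pos.
  assert (0 < exp (Rpower g p)) by apply exp_pos.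
  assert (0 < exp (-2 * t)) by apply exp_pos.
  unfold nonlin, lam. rewrite Hb1, Hb2, Hg2.
  replace (Rpower g p * (rpow_rem p v + 1 + p * v))
    with (Rpower g p + (Rpower g p * rpow_rem p v + p * Rpower g p * v + 2 * t) + (-2 * t)) by ring.
  replace ((p - 1) * ln (1 + v) + Rpower g p * rpow_rem p v + p * Rpower g p * v + 2 * t)
    with ((p - 1) * ln (1 + v) + (Rpower g p * rpow_rem p v + p * Rpower g p * v + 2 * t)) by ring.
  rewrite !exp_plus. field. repeat split; try lra; nra.
Qed.

Definition nl_const (eta e' : R) : R := (21 + 6 / (1 - eta)) * (1 + 8 / (e' - eta)) ^ 4.

Definition nl_threshold (A eta e' : R) : R :=
  1 + A + 4 * A / (1 - eta) + 2 * (6 / (1 - eta) + 4 * A) / (e' - eta)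
  + (6 / (1 - eta) + 2 * A + 18) ^ 2.

Lemma nl_const_pos eta e' : eta < e' -> e' < 1 -> 0 < nl_const eta e'.
Proof.
  intros H1 H2. unfold nl_const.
  assert (0 < 6 / (1 - eta)) by (apply Rdiv_lt_0_compat; lra).
  assert (0 < 8 / (e' - eta)) by (apply Rdiv_lt_0_compat; lra).
  apply Rmult_lt_0_compat; [lra|]. apply pow_lt. lra.
Qed.

Lemma nl_threshold_pos A eta e' : 0 <= A -> eta < e' -> e' < 1 -> 0 < nl_threshold A eta e'.
Proof.
  intros HA H1 H2. unfold nl_threshold.
  assert (0 <= 4 * A / (1 - eta)) by (apply Rdiv_le_0_compat; lra).
  assert (0 < 6 / (1 - eta)) by (apply Rdiv_lt_0_compat; lra).
  assert (0 <= 2 * (6 / (1 - eta) + 4 * A) / (e' - eta)) by (apply Rdiv_le_0_compat; lra).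
  assert (0 <= (6 / (1 - eta) + 2 * A + 18) ^ 2) by apply pow2_ge_0. lra.
Qed.

Section NonlinearRemainder.

Context {g p t w A eta e' : R}.
Hypotheses (g_pos : 0 < g) (p_bounds : 1 <= p <= 2) (eta_pos : 0 < eta) (eta_lt : eta < e')
  (e'_lt_1 : e' < 1) (t_nonneg : 0 <= t) (A_nonneg : 0 <= A).

Let P := Rpower g p.
Let c0 := 6 / (1 - eta).

Hypothesis P_large : nl_threshold A eta e' <= P.
Hypothesis t_le : t <= eta * p * P / 2.
Hypothesis w_small : Rabs w <= A * (t + 1) / P.

Let x := 2 * t / (p * P).
Let v := w / P - x.
Let Q := P * rpow_rem p v.
Let Z := (p - 1) * ln (1 + v) + Q + p * w.

Lemma P_large_bounds : 1 <= P /\ A <= P /\ 4 * A / (1 - eta) <= P /\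
  2 * (c0 + 4 * A) / (e' - eta) <= P /\ (c0 + 2 * A + 18) ^ 2 <= P.
Proof.
  unfold nl_threshold in P_large. fold c0 in P_large.
  assert (0 < c0) by (apply Rdiv_lt_0_compat; lra).
  assert (0 <= 4 * A / (1 - eta)) by (apply Rdiv_le_0_compat; lra).
  assert (0 <= 2 * (c0 + 4 * A) / (e' - eta)) by (apply Rdiv_le_0_compat; lra).
  assert (0 <= (c0 + 2 * A + 18) ^ 2) by apply pow2_ge_0.
  lra.
Qed.

Lemma x_bounds : 0 <= x <= eta /\ x <= 2 * t / P /\ P * (p * x ^ 2 / 2) = x * t.
Proof.
  destruct P_large_bounds as [HP1 _].
  unfold x. repeat split.
  - apply Rdiv_le_0_compat; nra.
  - apply Rmult_le_reg_r with (p * P); [nra|]. field_simplify; nra.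
  - unfold Rdiv. apply Rmult_le_compat_l; [lra|]. apply Rinv_le_contravar; nra.
  - field. lra.
Qed.

Lemma w_div_P_bounds : Rabs (w / P) <= (1 - eta) / 2 /\ Rabs (w / P) <= (t + 1) / P.
Proof.
  destruct P_large_bounds as (HP1 & HPA & HP2 & _).
  assert (Hd : Rabs (w / P) <= A * (t + 1) / P ^ 2).
  { unfold Rdiv. rewrite Rabs_mult, Rabs_inv, (Rabs_right P) by lra.
    apply Rle_trans with (A * (t + 1) / P * / P); [|right; field; lra].
    apply Rmult_le_compat_r; [apply Rlt_le, Rinv_0_lt_compat|]; lra. }
  assert (eta * p * P <= 2 * P) by (apply Rmult_le_compat_r; nra).
  assert (HtP : t + 1 <= 2 * P) by lra.
  split; eapply Rle_trans; try apply Hd; apply Rmult_le_reg_r with (P ^ 2); try nra.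
  - replace (A * (t + 1) / P ^ 2 * P ^ 2) with (A * (t + 1)) by (field; lra).
    apply Rmult_le_compat_r with (r := 1 - eta) in HP2; [|lra].
    unfold Rdiv in HP2. rewrite Rmult_assoc, Rinv_l in HP2 by lra. nra.
  - replace (A * (t + 1) / P ^ 2 * P ^ 2) with (A * (t + 1)) by (field; lra).
    replace ((t + 1) / P * P ^ 2) with ((t + 1) * P) by (field; lra). nra.
Qed.

Lemma v_bounds : (1 - eta) / 2 <= 1 + v /\ v <= 1 /\ Rabs v <= 3 * (t + 1) / P.
Proof.
  destruct P_large_bounds as [HP1 _]. destruct x_bounds as (Hx & Hxt & _).
  destruct w_div_P_bounds as [Hd1 Hd2].
  assert (Hd := proj1 (Rabs_le_between _ _) Hd1).
  unfold v. repeat split; try lra.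
  eapply Rle_trans; [apply Rabs_triang|]. rewrite Rabs_Ropp, (Rabs_right x) by lra.
  assert (2 * t / P <= 2 * (t + 1) / P)
    by (unfold Rdiv; apply Rmult_le_compat_r; [apply Rlt_le, Rinv_0_lt_compat|]; lra).
  replace (3 * (t + 1) / P) with ((t + 1) / P + 2 * (t + 1) / P) by (field; lra). lra.
Qed.

Lemma Q_bounds : 0 <= Q /\ Q <= 18 * (t + 1) ^ 2 / P /\ Q <= eta * t + 2 * Rabs w.
Proof.
  destruct P_large_bounds as [HP1 _]. destruct x_bounds as (Hx & Hxt & Hxx).
  destruct v_bounds as (Hv1 & Hv2 & Hv3).
  destruct (rpow_rem_bounds p v p_bounds ltac:(lra)) as [Hq0 Hq1].
  unfold Q. repeat split; [nra| |].
  - apply Rle_trans with (P * (2 * (3 * (t + 1) / P) ^ 2)); [|right; field; lra].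
    apply Rmult_le_compat_l; [lra|]. eapply Rle_trans; [apply Hq1|].
    apply Rmult_le_compat_l; [lra|]. now apply sq_le_of_Rabs_le.
  - assert (H1 := rpow_rem_neg_le p x p_bounds ltac:(lra)).
    assert (H2 := rpow_rem_lipschitz p (- x) v p_bounds ltac:(lra) ltac:(lra)).
    replace (v - - x) with (w / P) in H2 by (unfold v; ring).
    apply Rabs_le_between in H2.
    assert (E : P * Rabs (w / P) = Rabs w).
    { unfold Rdiv. rewrite Rabs_mult, Rabs_inv, (Rabs_right P) by lra. field. lra. }
    apply Rle_trans with (P * (p * x ^ 2 / 2) + P * (2 * Rabs (w / P))).
    + rewrite <- Rmult_plus_distr_l. apply Rmult_le_compat_l; lra.
    + rewrite Hxx. assert (x * t <= eta * t) by (apply Rmult_le_compat_r; lra). lra.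
Qed.

Lemma Rabs_ln_term_le : Rabs ((p - 1) * ln (1 + v)) <= c0 * (t + 1) / P.
Proof.
  destruct P_large_bounds as [HP1 _]. destruct v_bounds as (Hv1 & Hv2 & Hv3).
  rewrite Rabs_mult. apply Rle_trans with (1 * Rabs (ln (1 + v))).
  { apply Rmult_le_compat_r; [apply Rabs_pos|]. apply Rabs_le; lra. }
  rewrite Rmult_1_l. eapply Rle_trans; [apply Rabs_ln_le with (m := (1 - eta) / 2); lra|].
  replace (1 + v - 1) with v by ring.
  apply Rle_trans with (3 * (t + 1) / P / ((1 - eta) / 2)); [|right; unfold c0; field; lra].
  unfold Rdiv at 1 3. apply Rmult_le_compat_r; [apply Rlt_le, Rinv_0_lt_compat|]; lra.
Qed.

Lemma Rabs_p_mul_w_le : Rabs (p * w) <= 2 * A * (t + 1) / P.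
Proof.
  destruct P_large_bounds as [HP1 _].
  rewrite Rabs_mult, Rabs_right by lra.
  apply Rle_trans with (2 * (A * (t + 1) / P)); [|right; field; lra].
  apply Rmult_le_compat; auto using Rabs_pos; lra.
Qed.

Lemma Rabs_Z_le : Rabs Z <= (eta + (e' - eta) / 2) * t + 1.
Proof.
  destruct P_large_bounds as (HP1 & _ & _ & HP3 & _). destruct Q_bounds as (HQ0 & _ & HQ2).
  assert (H1 := Rabs_ln_term_le). assert (H2 := Rabs_p_mul_w_le).
  assert (HK : (c0 + 4 * A) * (t + 1) / P <= (e' - eta) / 2 * (t + 1)).
  { apply Rmult_le_compat_r with (r := (e' - eta) / 2) in HP3; [|lra].
    replace (2 * (c0 + 4 * A) / (e' - eta) * ((e' - eta) / 2)) with (c0 + 4 * A) in HP3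
      by (field; lra).
    apply Rmult_le_reg_r with P; [lra|]. unfold Rdiv. rewrite Rmult_assoc, Rinv_l, Rmult_1_r by lra.
    nra. }
  unfold Z. eapply Rle_trans; [apply Rabs_triang|].
  eapply Rle_trans; [apply Rplus_le_compat_r, Rabs_triang|].
  rewrite (Rabs_right Q) by lra.
  assert (c0 * (t + 1) / P + 2 * A * (t + 1) / P + 2 * (A * (t + 1) / P)
          = (c0 + 4 * A) * (t + 1) / P) by (field; lra).
  assert ((e' - eta) / 2 * (t + 1) <= (e' - eta) / 2 * t + 1) by nra.
  lra.
Qed.

Lemma Z_sq_le : Z ^ 2 <= (t + 1) ^ 4 / P.
Proof.
  destruct P_large_bounds as (HP1 & _ & _ & _ & HP4). destruct Q_bounds as (HQ0 & HQ1 & _).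
  assert (H1 := Rabs_ln_term_le). assert (H2 := Rabs_p_mul_w_le).
  assert (Hc0 : 0 < c0) by (apply Rdiv_lt_0_compat; lra).
  assert (Ht1 : t + 1 <= (t + 1) ^ 2) by nra.
  assert (HZ : Rabs Z <= (c0 + 2 * A + 18) * (t + 1) ^ 2 / P).
  { unfold Z. eapply Rle_trans; [apply Rabs_triang|].
    eapply Rle_trans; [apply Rplus_le_compat_r, Rabs_triang|].
    rewrite (Rabs_right Q) by lra.
    assert (c0 * (t + 1) / P <= c0 * (t + 1) ^ 2 / P)
      by (unfold Rdiv; apply Rmult_le_compat_r; [apply Rlt_le, Rinv_0_lt_compat|]; nra).
    assert (2 * A * (t + 1) / P <= 2 * A * (t + 1) ^ 2 / P)
      by (unfold Rdiv; apply Rmult_le_compat_r; [apply Rlt_le, Rinv_0_lt_compat|]; nra).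
    replace ((c0 + 2 * A + 18) * (t + 1) ^ 2 / P)
      with (c0 * (t + 1) ^ 2 / P + 2 * A * (t + 1) ^ 2 / P + 18 * (t + 1) ^ 2 / P) by (field; lra).
    lra. }
  eapply Rle_trans; [apply sq_le_of_Rabs_le, HZ|].
  replace (((c0 + 2 * A + 18) * (t + 1) ^ 2 / P) ^ 2)
    with ((c0 + 2 * A + 18) ^ 2 / P * ((t + 1) ^ 4 / P)) by (field; lra).
  assert (0 <= (t + 1) ^ 4 / P) by (apply Rdiv_le_0_compat; [apply pow_le|]; lra).
  assert ((c0 + 2 * A + 18) ^ 2 / P <= 1)
    by (apply Rmult_le_reg_r with P; [lra|]; unfold Rdiv; rewrite Rmult_assoc, Rinv_l by lra; lra).
  nra.
Qed.

Lemma exp_Rabs_Z_le : exp (Rabs Z) <= 3 * exp ((eta + (e' - eta) / 2) * t).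
Proof.
  apply Rle_trans with (exp 1 * exp ((eta + (e' - eta) / 2) * t)).
  - rewrite <- exp_plus. apply exp_le_exp. generalize Rabs_Z_le. lra.
  - generalize exp_le_3 (exp_pos ((eta + (e' - eta) / 2) * t)). nra.
Qed.

Lemma Rabs_exp_Z_remainder_le : Rabs (exp Z - 1 - p * w) <= nl_const eta e' * exp (e' * t) / P.
Proof.
  set (eps := (e' - eta) / 2).
  destruct P_large_bounds as [HP1 _]. destruct Q_bounds as (HQ0 & HQ1 & _).
  assert (HL := Rabs_ln_term_le). assert (HZ2 := Z_sq_le).
  assert (Hc0 : 0 < c0) by (apply Rdiv_lt_0_compat; lra).
  set (X := exp ((eta + eps) * t)).
  assert (HX1 : 1 <= X) by (rewrite <- exp_0; apply exp_le_exp; unfold eps; nra).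
  assert (HeZ := exp_Rabs_Z_le). fold eps X in HeZ.
  set (u := (t + 1) ^ 4 * X / P).
  assert (Ht4 : t + 1 <= (t + 1) ^ 4 * X /\ (t + 1) ^ 2 <= (t + 1) ^ 4 * X).
  { assert (1 <= (t + 1) ^ 2) by nra.
    assert (H4 : (t + 1) ^ 4 = (t + 1) ^ 2 * (t + 1) ^ 2) by ring.
    assert ((t + 1) ^ 4 <= (t + 1) ^ 4 * X)
      by (rewrite <- (Rmult_1_r ((t + 1) ^ 4)) at 1; apply Rmult_le_compat_l; nra).
    split; nra. }
  assert (B1 : Z ^ 2 * exp (Rabs Z) <= 3 * u).
  { apply Rle_trans with ((t + 1) ^ 4 / P * (3 * X)); [|right; unfold u; field; lra].
    apply Rmult_le_compat; auto using pow2_ge_0, Rlt_le, exp_pos. }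
  assert (Hdiv : forall y, y <= (t + 1) ^ 4 * X -> y / P <= u).
  { intros y Hy. unfold u, Rdiv. apply Rmult_le_compat_r; [apply Rlt_le, Rinv_0_lt_compat; lra|exact Hy]. }
  assert (B3 : (21 + c0) * u <= nl_const eta e' * exp (e' * t) / P).
  { assert (H := one_plus_pow4_mul_exp_le t (eta + eps) eps t_nonneg ltac:(unfold eps; lra)).
    replace (4 / eps) with (8 / (e' - eta)) in H by (unfold eps; field; lra).
    replace (eta + eps + eps) with e' in H by (unfold eps; field).
    replace (1 + t) with (t + 1) in H by ring.
    unfold u, nl_const. fold c0.
    replace ((21 + c0) * ((t + 1) ^ 4 * X / P)) with ((21 + c0) * ((t + 1) ^ 4 * X) / P)
      by (field; lra).
    rewrite (Rmult_assoc (21 + c0)).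
    apply Rmult_le_compat_r; [apply Rlt_le, Rinv_0_lt_compat; lra|].
    apply Rmult_le_compat_l; [lra|exact H]. }
  assert (c0 * (t + 1) / P <= c0 * u)
    by (unfold Rdiv; rewrite Rmult_assoc; apply Rmult_le_compat_l; [lra|apply Hdiv, Ht4]).
  assert (18 * (t + 1) ^ 2 / P <= 18 * u)
    by (unfold Rdiv; rewrite Rmult_assoc; apply Rmult_le_compat_l; [lra|apply Hdiv, Ht4]).
  replace (exp Z - 1 - p * w) with ((exp Z - 1 - Z) + ((p - 1) * ln (1 + v) + Q)) by (unfold Z; ring).
  eapply Rle_trans; [apply Rabs_triang|].
  eapply Rle_trans; [apply Rplus_le_compat_r, Rabs_exp_taylor1_le|].
  eapply Rle_trans; [apply Rplus_le_compat_l, Rabs_triang|].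
  rewrite (Rabs_right Q) by lra. lra.
Qed.

Lemma nonlinear_estimate mu : 0 < mu ->
  0 < g * (1 + v) /\ g * (1 + v) <= 2 * g /\
  Rabs (nonlin (lam p mu g) p (g * (1 + v)) * (mu ^ 2 * Rpower g (p - 1) * p) / (8 * exp (-2 * t))
        - 1 - p * w) <= nl_const eta e' * exp (e' * t) / P.
Proof.
  intros Hmu. destruct P_large_bounds as [HP1 _]. destruct v_bounds as (Hv1 & Hv2 & _).
  split; [apply Rmult_lt_0_compat; lra|]. split; [nra|].
  rewrite nonlin_scaled_eq by lra. fold P. fold Q.
  replace ((p - 1) * ln (1 + v) + Q + p * P * v + 2 * t) with Z by (unfold Z, v, x; field; lra).
  apply Rabs_exp_Z_remainder_le.
Qed.

End NonlinearRemainder.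

(** * The bootstrap for a fixed gamma *)

Definition wder (g p mu : R) (b : R -> R) (r : R) : R :=
  Rpower g p * (Derive b r / g) + 2 * dtfun mu r / p.

Definition err (g p mu : R) (b : R -> R) (r : R) : R :=
  nonlin (lam p mu g) p (b r) * (mu ^ 2 * Rpower g (p - 1) * p) / (8 * exp (-2 * tfun mu r)) - 1.

(* The equation for [B] reads [w'' + w' / r + potential mu * w = forcing] for [w = wfun]. *)
Definition forcing (g p mu h0 : R) (b : R -> R) (r : R) : R :=
  Rpower g (p - 1) * h0 * b r - potential mu r * (err g p mu b r - p * wfun g p mu b r) / p.

Definition boot_const (h0 M eta e' : R) : R := lin_const e' * (4 * h0 * M + nl_const eta e').

Lemma nonlin_eq_err g p mu (b : R -> R) r : 0 < p -> 0 < mu ->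
  nonlin (lam p mu g) p (b r)
  = 8 * exp (-2 * tfun mu r) / (mu ^ 2 * Rpower g (p - 1) * p) * (1 + err g p mu b r).
Proof.
  intros Hp Hmu. assert (0 < exp (-2 * tfun mu r)) by apply exp_pos.
  assert (0 < Rpower g (p - 1)) by apply exp_pos.
  unfold err. field. repeat split; try lra; nra.
Qed.

Lemma boot_const_nonneg h0 M eta e' : 0 <= h0 -> 0 <= M -> 0 < eta < e' -> e' < 1 ->
  0 <= boot_const h0 M eta e'.
Proof.
  intros Hh0 HM He He'. unfold boot_const.
  assert (H1 := lin_const_ge_20 e' ltac:(lra)). assert (H2 := nl_const_pos eta e' ltac:(lra) He').
  apply Rmult_le_pos; nra.
Qed.

Definition final_const (h0 M eta e' : R) : R :=
  boot_const h0 M eta e' + nl_const eta e' + 2 * boot_const h0 M eta e' / e'.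

Lemma final_const_pos h0 M eta e' : 0 <= h0 -> 0 <= M -> 0 < eta < e' -> e' < 1 ->
  0 < final_const h0 M eta e'.
Proof.
  intros Hh0 HM He He'. unfold final_const.
  assert (H1 := boot_const_nonneg h0 M eta e' Hh0 HM He He').
  assert (H2 := nl_const_pos eta e' ltac:(lra) He').
  assert (0 <= 2 * boot_const h0 M eta e' / e') by (apply Rdiv_le_0_compat; lra). lra.
Qed.

Section OneGamma.

Context {g p mu rb h0 : R} {b : R -> R}.
Hypotheses (g_pos : 0 < g) (p_bounds : 1 <= p <= 2) (mu_pos : 0 < mu) (rb_pos : 0 < rb).
Hypothesis b_reg : forall r, - rb <= r <= rb -> ex_derive b r /\ ex_derive (Derive b) r.
Hypothesis b_even : forall r, - rb <= r <= rb -> b (- r) = b r.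
Hypothesis b_0 : b 0 = g.
Hypothesis b_ode : forall r, 0 < r < rb ->
  - (Derive (Derive b) r + Derive b r / r) + h0 * b r = nonlin (lam p mu g) p (b r).

Let P := Rpower g p.
Let w := wfun g p mu b.
Let wd := wder g p mu b.

Lemma P_pos : 0 < P.
Proof. apply exp_pos. Qed.

Lemma is_derive_wfun s : - rb <= s <= rb -> is_derive w s (wd s).
Proof.
  intros Hs. assert (Hb := Derive_correct b s (proj1 (b_reg s Hs))).
  assert (HP : 0 < Rpower g p) by apply exp_pos.
  unfold w, wd, wfun, wder, tfun. auto_derive.
  - split; [now exists (Derive b s)|split; [|easy]].
    assert (0 <= s ^ 2 / mu ^ 2) by (apply Rdiv_le_0_compat; nra). simpl in *. unfold Rdiv in *. lra.
  - change (Derive (fun x => b x) s) with (Derive b s).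
    unfold dtfun, qfun. field. repeat split; try lra; nra.
Qed.

Lemma is_derive_wder s : - rb <= s <= rb ->
  is_derive wd s (P * (Derive (Derive b) s / g) + 2 * ddtfun mu s / p).
Proof.
  intros Hs. assert (Hb := Derive_correct _ s (proj2 (b_reg s Hs))).
  assert (Ht := is_derive_dtfun mu_pos s).
  unfold wd, wder. auto_derive.
  - repeat split; [now exists (Derive (Derive b) s)|now exists (ddtfun mu s)].
  - change (Derive (fun x => dtfun mu x) s) with (Derive (dtfun mu) s).
    change (Derive (fun x => Derive b x) s) with (Derive (Derive b) s).
    rewrite (is_derive_unique _ _ _ Ht). fold P. field. lra.
Qed.

Lemma wfun_ode s : 0 < s < rb -> Derive wd s + wd s / s = forcing g p mu h0 b s - potential mu s * w s.
Proof.
  intros Hs. rewrite (is_derive_unique _ _ _ (is_derive_wder s ltac:(lra))).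
  specialize (b_ode s Hs). assert (Hdd := dtfun_ode mu_pos s ltac:(lra)).
  assert (Hgp := Rpower_pred_mul g p g_pos). assert (Hq := qfun_pos mu_pos s).
  assert (Hgp0 : 0 < Rpower g (p - 1)) by apply exp_pos.
  unfold wd, w, wder, forcing, err, wfun. rewrite (exp_neg2_tfun mu_pos).
  set (N := nonlin (lam p mu g) p (b s)) in *.
  replace (Derive (Derive b) s) with (h0 * b s - N - Derive b s / s) by lra.
  replace (ddtfun mu s) with (potential mu s / 2 - dtfun mu s / s) by lra.
  unfold P. rewrite <- Hgp. unfold potential. field. repeat split; lra.
Qed.

Lemma wfun_0 : w 0 = 0.
Proof.
  assert (0 < Rpower g p) by apply exp_pos.
  unfold w, wfun. rewrite b_0, (tfun_0 mu_pos). field. repeat split; lra.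
Qed.

Lemma wder_0 : wd 0 = 0.
Proof.
  assert (HD : Derive b 0 = 0).
  { apply (is_derive_even_0 b rb); auto. apply Derive_correct, b_reg. lra. }
  unfold wd, wder. rewrite HD, (dtfun_0 mu_pos). field. lra.
Qed.

Lemma b_eq_wfun s : b s = g * (1 + (w s / P - 2 * tfun mu s / (p * P))).
Proof. assert (HP := P_pos). unfold w, wfun. fold P. field. repeat split; lra. Qed.

Variables (eta eta' M : R).
Hypotheses (h0_pos : 0 < h0) (eta_pos : 0 < eta) (eta_lt : eta < eta') (eta'_lt_1 : eta' < 1)
  (M_nonneg : 0 <= M) (mu_lt_rb : mu < rb).
Hypothesis rb_small : Rpower g (2 * p) * rb ^ 2 <= M.
Hypothesis t_rb : tfun mu rb <= eta * p * P / 2.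

Let C1 := boot_const h0 M eta eta'.
Let A := C1 + 1.

Hypothesis P_large : nl_threshold A eta eta' <= P.
Hypothesis P_ge_A : A <= P.

Lemma C1_nonneg : 0 <= C1.
Proof. apply boot_const_nonneg; lra. Qed.

Lemma nonlinear_estimate_at s : 0 <= s <= rb -> Rabs (w s) <= A * (tfun mu s + 1) / P ->
  0 < b s /\ b s <= 2 * g /\
  Rabs (err g p mu b s - p * w s) <= nl_const eta eta' * exp (eta' * tfun mu s) / P.
Proof.
  intros Hs Hws. assert (HA : 0 <= A) by (generalize C1_nonneg; unfold A; lra).
  assert (Ht : tfun mu s <= eta * p * P / 2)
    by (eapply Rle_trans; [apply (tfun_le_tfun mu_pos s rb); lra|exact t_rb]).
  unfold err. rewrite b_eq_wfun.
  exact (nonlinear_estimate g_pos p_bounds eta_pos eta_lt eta'_lt_1 (tfun_nonneg mu_pos s)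
           HA P_large Ht Hws mu mu_pos).
Qed.

Lemma Rabs_forcing_le s : 0 <= s <= rb -> Rabs (w s) <= A * (tfun mu s + 1) / P ->
  Rabs (forcing g p mu h0 b s)
  <= 2 * h0 * P + nl_const eta eta' / P * potential mu s * exp (eta' * tfun mu s).
Proof.
  intros Hs Hws. destruct (nonlinear_estimate_at s Hs Hws) as (Hb0 & Hb2 & HE).
  assert (HP := P_pos). assert (Hrho := potential_nonneg mu_pos s).
  assert (Hgp := Rpower_pred_mul g p g_pos). assert (Hgp0 : 0 < Rpower g (p - 1)) by apply exp_pos.
  fold w. unfold forcing. eapply Rle_trans; [apply Rabs_triang|]. rewrite Rabs_Ropp.
  apply Rplus_le_compat.
  - rewrite Rabs_right by (apply Rle_ge; repeat apply Rmult_le_pos; lra).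
    unfold P. rewrite <- Hgp. assert (0 <= Rpower g (p - 1) * h0) by nra. nra.
  - unfold Rdiv. rewrite !Rabs_mult, Rabs_inv, (Rabs_right (potential mu s)), (Rabs_right p) by lra.
    assert (/ p <= 1) by (rewrite <- Rinv_1; apply Rinv_le_contravar; lra).
    assert (0 < / p) by (apply Rinv_0_lt_compat; lra).
    assert (HE0 := Rabs_pos (err g p mu b s + - (p * w s))).
    apply Rle_trans with (potential mu s * Rabs (err g p mu b s + - (p * w s)) * 1).
    + apply Rmult_le_compat_l; [apply Rmult_le_pos|]; lra.
    + rewrite Rmult_1_r.
      replace (nl_const eta eta' * / P * potential mu s * exp (eta' * tfun mu s))
        with (potential mu s * (nl_const eta eta' * exp (eta' * tfun mu s) * / P)) by ring.
      apply Rmult_le_compat_l; [lra|exact HE].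
Qed.

Lemma linear_coeff_le r : 0 <= r <= rb ->
  lin_const eta' * (2 * h0 * P * (mu ^ 2 + r ^ 2) + nl_const eta eta' / P) <= C1 / P.
Proof.
  intros Hr. assert (HP := P_pos). assert (HKL := lin_const_ge_20 eta' ltac:(lra)).
  assert (HPrb : P * rb ^ 2 <= M / P).
  { assert (HP2 : Rpower g (2 * p) = P ^ 2)
      by (unfold P; replace (2 * p) with (p + p) by ring; rewrite Rpower_plus; ring).
    assert (H := rb_small). rewrite HP2 in H.
    apply Rmult_le_reg_r with P; [lra|]. replace (M / P * P) with M by (field; lra). nra. }
  assert (2 * h0 * P * (mu ^ 2 + r ^ 2) <= 4 * h0 * M / P).
  { apply Rle_trans with (4 * h0 * (P * rb ^ 2)).
    2: { replace (4 * h0 * M / P) with (4 * h0 * (M / P)) by (field; lra).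
         apply Rmult_le_compat_l; lra. }
    assert (mu ^ 2 + r ^ 2 <= 2 * rb ^ 2) by nra.
    replace (4 * h0 * (P * rb ^ 2)) with (2 * h0 * P * (2 * rb ^ 2)) by ring.
    apply Rmult_le_compat_l; nra. }
  unfold C1, boot_const.
  replace (lin_const eta' * (4 * h0 * M + nl_const eta eta') / P)
    with (lin_const eta' * (4 * h0 * M / P + nl_const eta eta' / P)) by (field; lra).
  apply Rmult_le_compat_l; lra.
Qed.

Lemma wfun_estimate_upto r : 0 <= r <= rb ->
  (forall s, 0 <= s <= r -> Rabs (w s) <= A * (tfun mu s + 1) / P) ->
  forall s, 0 <= s <= r -> Rabs (w s) <= C1 / P * tfun mu s /\ Rabs (wd s) <= C1 / P * dtfun mu s.
Proof.
  intros Hr Hboot s Hs. assert (HP := P_pos).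
  assert (HL : Rabs (w s) <= lin_const eta' * (2 * h0 * P * (mu ^ 2 + r ^ 2) + nl_const eta eta' / P)
                             * tfun mu s /\
               Rabs (wd s) <= lin_const eta' * (2 * h0 * P * (mu ^ 2 + r ^ 2) + nl_const eta eta' / P)
                             * dtfun mu s).
  { apply (linear_estimate (F := forcing g p mu h0 b)); auto; try lra.
    - nra.
    - apply Rdiv_le_0_compat; [apply Rlt_le, nl_const_pos|]; lra.
    - intros s' Hs'. apply is_derive_wfun. lra.
    - intros s' Hs'. eexists. apply is_derive_wder. lra.
    - intros s' Hs'. apply wfun_ode. lra.
    - exact wfun_0.
    - exact wder_0.
    - intros s' Hs'. apply Rabs_forcing_le; [lra|]. apply Hboot. lra. }
  assert (Hc := linear_coeff_le r Hr).
  destruct HL as [L1 L2]. split.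
  - eapply Rle_trans; [exact L1|]. apply Rmult_le_compat_r; [apply (tfun_nonneg mu_pos)|exact Hc].
  - eapply Rle_trans; [exact L2|]. apply Rmult_le_compat_r; [apply (dtfun_nonneg mu_pos); lra|exact Hc].
Qed.

Lemma wfun_estimate s : 0 <= s <= rb ->
  Rabs (w s) <= C1 / P * tfun mu s /\ Rabs (wd s) <= C1 / P * dtfun mu s.
Proof.
  assert (HP := P_pos). assert (HC1 := C1_nonneg).
  assert (Hweak : forall s, A * (tfun mu s + 1 / P) / P <= A * (tfun mu s + 1) / P).
  { intros s'. unfold Rdiv. apply Rmult_le_compat_r; [apply Rlt_le, Rinv_0_lt_compat; lra|].
    apply Rmult_le_compat_l; [unfold A; lra|].
    assert (/ P <= 1) by (rewrite <- Rinv_1; apply Rinv_le_contravar; unfold A in P_ge_A; lra). lra. }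
  (* the slack [A - C1 = 1] makes the bootstrap bound strictly improve *)
  assert (Hstrict : forall s, 0 <= s <= rb -> Rabs (w s) - A * (tfun mu s + 1 / P) / P <= 0).
  { apply continuity_argument; [lra| | |].
    - intros s' Hs'. apply continuity_pt_minus.
      + apply (continuity_pt_comp w Rabs); [|apply Rcontinuity_abs].
        eapply is_derive_continuity_pt, is_derive_wfun. lra.
      + apply continuity_pt_div; [| |lra]; [|apply continuity_pt_const; now intros ? ?].
        apply continuity_pt_mult; [apply continuity_pt_const; now intros ? ?|].
        apply continuity_pt_plus; [eapply is_derive_continuity_pt, (is_derive_tfun mu_pos)|].
        apply continuity_pt_const. now intros ? ?.
    - rewrite wfun_0, Rabs_R0, (tfun_0 mu_pos).
      assert (0 < 1 / P) by (apply Rdiv_lt_0_compat; lra).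
      assert (0 <= A * (0 + 1 / P) / P); [|lra].
      apply Rdiv_le_0_compat; [apply Rmult_le_pos; [unfold A|]|]; lra.
    - intros r Hr Hphi s' Hs'.
      destruct (wfun_estimate_upto r Hr) with (s := s') as [L1 _]; auto.
      { intros s'' Hs''. specialize (Hphi s'' Hs''). specialize (Hweak s''). lra. }
      assert (Ht := tfun_nonneg mu_pos s').
      assert (C1 / P * tfun mu s' < A * (tfun mu s' + 1 / P) / P); [|lra].
      replace (A * (tfun mu s' + 1 / P) / P) with (C1 / P * tfun mu s' + (tfun mu s' + A / P) / P)
        by (unfold A; field; lra).
      assert (0 < (tfun mu s' + A / P) / P); [|lra].
      apply Rdiv_lt_0_compat; [|lra]. assert (0 < A / P) by (apply Rdiv_lt_0_compat; unfold A; lra). lra. }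
  intros Hs. apply (wfun_estimate_upto rb); [lra| |exact Hs].
  intros s' Hs'. specialize (Hstrict s' Hs'). specialize (Hweak s'). lra.
Qed.

Lemma C1_div_P_le_1 : C1 / P <= 1.
Proof.
  assert (HP := P_pos). apply Rmult_le_reg_r with P; [lra|].
  unfold Rdiv. rewrite Rmult_assoc, Rinv_l by lra. unfold A in P_ge_A. lra.
Qed.

Lemma b_le_gamma r : 0 <= r <= rb -> b r <= g.
Proof.
  intros Hr. destruct (wfun_estimate r Hr) as [Hw _].
  assert (HP := P_pos). assert (Ht := tfun_nonneg mu_pos r). assert (HC := C1_div_P_le_1).
  assert (HC1 := C1_nonneg). assert (0 <= C1 / P) by (apply Rdiv_le_0_compat; lra).
  assert (Hwt : w r <= tfun mu r) by (apply Rabs_le_between in Hw; nra).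
  assert (w r / P <= 2 * tfun mu r / (p * P)).
  { apply Rmult_le_reg_r with (p * P); [nra|].
    replace (w r / P * (p * P)) with (p * w r) by (field; lra).
    replace (2 * tfun mu r / (p * P) * (p * P)) with (2 * tfun mu r) by (field; lra). nra. }
  rewrite b_eq_wfun. nra.
Qed.

Lemma Rabs_err_le r : 0 <= r <= rb ->
  Rabs (err g p mu b r) <= (nl_const eta eta' + 2 * C1 / eta') * exp (eta' * tfun mu r) / P.
Proof.
  intros Hr. destruct (wfun_estimate r Hr) as [Hw _].
  assert (HP := P_pos). assert (Ht := tfun_nonneg mu_pos r). assert (HC1 := C1_nonneg).
  assert (Hw' : Rabs (w r) <= A * (tfun mu r + 1) / P).
  { eapply Rle_trans; [exact Hw|].
    replace (C1 / P * tfun mu r) with (C1 * tfun mu r / P) by (field; lra).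
    unfold Rdiv. apply Rmult_le_compat_r; [apply Rlt_le, Rinv_0_lt_compat; lra|]. unfold A. nra. }
  destruct (nonlinear_estimate_at r Hr Hw') as (_ & _ & HE).
  assert (Hte : tfun mu r <= exp (eta' * tfun mu r) / eta').
  { assert (H1 := exp_ineq1_le (eta' * tfun mu r)).
    apply Rmult_le_reg_r with eta'; [lra|]. unfold Rdiv. rewrite Rmult_assoc, Rinv_l by lra. nra. }
  replace (err g p mu b r) with ((err g p mu b r - p * w r) + p * w r) by ring.
  eapply Rle_trans; [apply Rabs_triang|].
  rewrite Rabs_mult, (Rabs_right p) by lra.
  assert (p * Rabs (w r) <= 2 * (C1 / P * tfun mu r))
    by (apply Rmult_le_compat; auto using Rabs_pos; lra).
  assert (2 * (C1 / P * tfun mu r) <= 2 * C1 / eta' * exp (eta' * tfun mu r) / P).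
  { apply Rle_trans with (2 * C1 / P * (exp (eta' * tfun mu r) / eta')); [|right; field; lra].
    replace (2 * (C1 / P * tfun mu r)) with (2 * C1 / P * tfun mu r) by (field; lra).
    apply Rmult_le_compat_l; [apply Rdiv_le_0_compat|]; lra. }
  replace ((nl_const eta eta' + 2 * C1 / eta') * exp (eta' * tfun mu r) / P)
    with (nl_const eta eta' * exp (eta' * tfun mu r) / P + 2 * C1 / eta' * exp (eta' * tfun mu r) / P)
    by (field; lra).
  lra.
Qed.

Lemma one_gamma_estimate r : 0 <= r <= rb ->
  b r <= g /\
  Rabs (w r) <= final_const h0 M eta eta' / P * tfun mu r /\
  Rabs (Derive w r) <= final_const h0 M eta eta' / P * Derive (tfun mu) r /\
  exists E, nonlin (lam p mu g) p (b r)
              = 8 * exp (- 2 * tfun mu r) / (mu ^ 2 * Rpower g (p - 1) * p) * (1 + E) /\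
            Rabs E <= final_const h0 M eta eta' * exp (eta' * tfun mu r) / P.
Proof.
  intros Hr. destruct (wfun_estimate r Hr) as [Hw Hwd].
  assert (HP := P_pos). assert (HC1 := C1_nonneg).
  assert (HKE := nl_const_pos eta eta' eta_lt eta'_lt_1).
  assert (HC : C1 / P <= final_const h0 M eta eta' / P).
  { unfold Rdiv. apply Rmult_le_compat_r; [apply Rlt_le, Rinv_0_lt_compat; lra|].
    unfold final_const. fold C1. assert (0 <= 2 * C1 / eta') by (apply Rdiv_le_0_compat; lra). lra. }
  split; [apply b_le_gamma, Hr|]. split; [|split].
  - eapply Rle_trans; [exact Hw|]. apply Rmult_le_compat_r; [apply (tfun_nonneg mu_pos)|exact HC].
  - rewrite (is_derive_unique _ _ _ (is_derive_wfun r ltac:(lra))),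
      (is_derive_unique _ _ _ (is_derive_tfun mu_pos r)).
    eapply Rle_trans; [exact Hwd|]. apply Rmult_le_compat_r; [apply (dtfun_nonneg mu_pos); lra|exact HC].
  - exists (err g p mu b r). split; [apply nonlin_eq_err; lra|].
    eapply Rle_trans; [apply Rabs_err_le, Hr|].
    unfold Rdiv. apply Rmult_le_compat_r; [apply Rlt_le, Rinv_0_lt_compat; lra|].
    apply Rmult_le_compat_r; [apply Rlt_le, exp_pos|]. unfold final_const. fold C1. lra.
Qed.

End OneGamma.

Theorem proposition2p1
  (Gam : R -> Prop) (p mu rbar : R -> R) (B : R -> R -> R) (eta h0 : R)
  (HGpos : forall g, Gam g -> 0 < g)
  (HGunb : forall M, exists g, Gam g /\ M <= g)
  (Hp : forall g, Gam g -> 1 <= p g <= 2)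
  (Hmu : forall g, Gam g -> 0 < mu g)
  (Heta : 0 < eta < 1) (Hh0 : 0 < h0)
  (Hrbar : forall g, Gam g -> 0 < rbar g)
  (Hratio : forall eps, 0 < eps -> exists G, forall g, Gam g -> G <= g ->
              mu g / rbar g < eps)
  (Htr : exists G, forall g, Gam g -> G <= g ->
              tfun (mu g) (rbar g) <= eta * p g * Rpower g (p g) / 2)
  (HO1 : exists M G, forall g, Gam g -> G <= g ->
              Rpower g (2 * p g) * rbar g ^ 2 <= M)
  (* regularity of the radial profile r |-> B_gamma(r), extended evenly *)
  (Hreg : forall g, Gam g -> forall r, - rbar g <= r <= rbar g ->
              ex_derive (B g) r /\ ex_derive (Derive (B g)) r)
  (Heven : forall g, Gam g -> forall r, - rbar g <= r <= rbar g ->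
              B g (- r) = B g r)
  (Hpos : forall g, Gam g -> forall r, 0 <= r < rbar g -> 0 < B g r)
  (H0 : forall g, Gam g -> B g 0 = g)
  (* Delta B + h0 B = f(B), with Delta = -(d^2/dr^2 + (1/r) d/dr) for radial functions *)
  (Hode : forall g, Gam g -> forall r, 0 < r < rbar g ->
      - (Derive (Derive (B g)) r + Derive (B g) r / r) + h0 * B g r
        = nonlin (lam (p g) (mu g) g) (p g) (B g r))
  (* at the origin, Delta B(0) = -2 B''(0) *)
  (Hode0 : forall g, Gam g ->
      - (2 * Derive (Derive (B g)) 0) + h0 * B g 0
        = nonlin (lam (p g) (mu g) g) (p g) (B g 0)) :
  forall eta', eta < eta' < 1 ->
  exists C G, 0 < C /\
    forall g, Gam g -> G <= g -> forall r, 0 <= r <= rbar g ->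
      B g r <= g /\
      Rabs (wfun g (p g) (mu g) (B g) r) <= C / Rpower g (p g) * tfun (mu g) r /\
      Rabs (Derive (wfun g (p g) (mu g) (B g)) r)
        <= C / Rpower g (p g) * Derive (tfun (mu g)) r /\
      exists E,
        nonlin (lam (p g) (mu g) g) (p g) (B g r)
          = 8 * exp (- 2 * tfun (mu g) r)
              / (mu g ^ 2 * Rpower g (p g - 1) * p g) * (1 + E) /\
        Rabs E <= C * exp (eta' * tfun (mu g) r) / Rpower g (p g).
Proof.
  intros eta' Heta'.
  destruct Htr as [G1 HG1]. destruct HO1 as [M [G2 HG2]]. destruct (Hratio 1 Rlt_0_1) as [G3 HG3].
  set (C1 := boot_const h0 (Rabs M) eta eta').
  set (G := 1 + nl_threshold (C1 + 1) eta eta' + C1).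
  assert (HC1 : 0 <= C1) by (apply boot_const_nonneg; auto using Rabs_pos; lra).
  assert (HN := nl_threshold_pos (C1 + 1) eta eta' ltac:(lra) ltac:(lra) ltac:(lra)).
  exists (final_const h0 (Rabs M) eta eta'), (Rmax (Rmax G1 G2) (Rmax G3 G)).
  split; [apply final_const_pos; auto using Rabs_pos; lra|].
  intros g Hg HgG.
  assert (HGs : G1 <= g /\ G2 <= g /\ G3 <= g /\ G <= g).
  { generalize (Rmax_l G1 G2) (Rmax_r G1 G2) (Rmax_l G3 G) (Rmax_r G3 G)
      (Rmax_l (Rmax G1 G2) (Rmax G3 G)) (Rmax_r (Rmax G1 G2) (Rmax G3 G)). lra. }
  assert (HP : G <= Rpower g (p g)).
  { destruct (Hp g Hg). apply Rle_trans with g; [lra|]. apply Rpower_ge_base; unfold G in HGs; lra. }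
  assert (Hrb := Hrbar g Hg).
  apply (one_gamma_estimate (h0 := h0)); auto; try lra; fold C1.
  - apply Rabs_pos.
  - apply Rmult_lt_reg_r with (/ rbar g); [now apply Rinv_0_lt_compat|].
    rewrite Rinv_r by lra. apply HG3; auto; lra.
  - eapply Rle_trans; [apply HG2; auto; lra|apply Rle_abs].
  - apply HG1; auto; lra.
  - unfold G in HP. lra.
  - unfold G in HP. lra.
Qed.
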